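(* Suppose $X$ is transfinitely $\pi_1$-commutative at $x\in X$. Then $X$ has well-defined infinite $\pi_1$-products at $x$ if and only if $X$ has well-defined transfinite $\pi_1$-products at $x$. Moreover, if $X$ is first countable at $x$, these conditions are also equivalent to $X$ being homotopically Hausdorff at $x$.
   Context: Let $\mathbb{H}=\bigcup_nC_n$ be the Hawaiian earring ($C_n\subset\mathbb{R}^2$ the circle of radius $1/n$ centered at $(1/n,0)$, basepoint $b_0=(0,0)$), $\ell_n$ the counterclockwise loop on $C_n$. A sequence of loops $\alpha_n\in\Omega(X,x)$ is a null-sequence if every neighborhood of $x$ contains all but finitely many $\mathrm{Im}(\alpha_n)$; then there is a unique map $f:(\mathbb{H},b_0)\to(X,x)$ with $f\circ\ell_n=\alpha_n$. $\ell_\infty$ is the loop equal to $\ell_n$ on $[\frac{n-1}{n},\frac{n}{n+1}]$ with $\ell_\infty(1)=b_0$; with $\mathcal{C}\subseteq[0,1]$ the middle-thirds Cantor set and $[0,1]\setminus\mathcal{C}=\bigcup_{n\ge1}\bigcup_{k=1}^{2^{n-1}}I_n^k$ (open intervals of length $3^{-n}$, left to right for fixed $n$), $\ell_\tau$ is the loop with $\ell_\tau(\mathcal{C})=b_0$ equal to $\ell_{2^{n-1}+k-1}$ on $\overline{I_n^k}$. Set $\prod_{n=1}^\infty\alpha_n:=f\circ\ell_\infty$ and $\prod_\tau\alpha_n:=f\circ\ell_\tau$. $X$ is transfinitely $\pi_1$-commutative at $x$ if $[\prod_\tau\alpha_n]=[\prod_\tau\alpha_{\phi(n)}]$ for every null-sequence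 and bijection $\phi:\mathbb{N}\to\mathbb{N}$. $X$ has well-defined infinite (resp. transfinite) $\pi_1$-products at $x$ if for all null-sequences $\alpha_n,\beta_n\in\Omega(X,x)$ with $\alpha_n\simeq\beta_n$ (path-homotopic) for all $n$, we have $\prod_{n=1}^\infty\alpha_n\simeq\prod_{n=1}^\infty\beta_n$ (resp. $\prod_\tau\alpha_n\simeq\prod_\tau\beta_n$). $X$ is homotopically Hausdorff at $x$ if for every nontrivial $[\alpha]\in\pi_1(X,x)$ there is a neighborhood $U$ of $x$ such that no loop in $U$ based at $x$ represents $[\alpha]$. *)

From Stdlib Require Import Reals Lra Lia Arith.
Open Scope R_scope.

Record TopSpace := {
  pt :> Type;
  is_open : (pt -> Prop) -> Prop;
  open_full : is_open (fun _ => True);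
  open_inter : forall U V, is_open U -> is_open V -> is_open (fun z => U z /\ V z);
  open_union : forall (F : (pt -> Prop) -> Prop),
      (forall U, F U -> is_open U) -> is_open (fun z => exists U, F U /\ U z)
}.

(** Paths are represented as functions [R -> X]; only their values on
    [0,1] matter.  [I01 t] means [t] lies in the unit interval. *)
Definition I01 (t : R) : Prop := 0 <= t <= 1.

Definition cont01 {X : TopSpace} (f : R -> X) : Prop :=
  forall U, is_open X U -> forall t, I01 t -> U (f t) ->
    exists eps, eps > 0 /\ forall s, I01 s -> Rabs (s - t) < eps -> U (f s).

Definition cont01sq {X : TopSpace} (H : R -> R -> X) : Prop :=
  forall U, is_open X U -> forall s t, I01 s -> I01 t -> U (H s t) ->
    exists eps, eps > 0 /\ forall s' t', I01 s' -> I01 t' ->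
      Rabs (s' - s) < eps -> Rabs (t' - t) < eps -> U (H s' t').

Definition is_loop {X : TopSpace} (x : X) (a : R -> X) : Prop :=
  cont01 a /\ a 0 = x /\ a 1 = x.

Definition phtpy {X : TopSpace} (a b : R -> X) : Prop :=
  exists H : R -> R -> X, cont01sq H /\
    (forall t, I01 t -> H 0 t = a t) /\
    (forall t, I01 t -> H 1 t = b t) /\
    (forall s, I01 s -> H s 0 = a 0 /\ H s 1 = a 1).

(** null-sequences (0-based indexing: a 0 is the paper's alpha_1) *)
Definition null_seq {X : TopSpace} (x : X) (a : nat -> R -> X) : Prop :=
  (forall n, is_loop x (a n)) /\
  forall U, is_open X U -> U x ->
    exists N, forall n, (N <= n)%nat -> forall t, I01 t -> U (a n t).

(** [p] is (a representative on [0,1] of) f o l_infty, i.e. prod_{n>=1} alpha_n: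
    on [k/(k+1), (k+1)/(k+2)] it is a_k linearly reparametrized, and p 1 = x *)
Definition IsInfProd {X : TopSpace} (x : X) (a : nat -> R -> X) (p : R -> X) : Prop :=
  (forall (k : nat) t,
      INR k / INR (k + 1) <= t <= INR (k + 1) / INR (k + 2) ->
      p t = a k ((t - INR k / INR (k + 1)) * INR (k + 1) * INR (k + 2)))
  /\ p 1 = x.

(** [tern n m] : the n low binary digits of m, read in base 3 *)
Fixpoint tern (n m : nat) : nat :=
  match n with
  | O => O
  | S n' => ((if Nat.odd m then 1 else 0) + 3 * tern n' (Nat.div2 m))%nat
  end.

(** Endpoints of the middle-thirds complementary interval I_{n+1}^{k+1}
    (0-based n and k, k < 2^n), numbered left to right:
    I = ((3a+1)/3^(n+1), (3a+2)/3^(n+1)) with a = 2 * tern n k. *)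
Definition Ileft (n k : nat) : R := INR (3 * (2 * tern n k) + 1) / 3 ^ (n + 1).
Definition Iright (n k : nat) : R := INR (3 * (2 * tern n k) + 2) / 3 ^ (n + 1).

(** [p] is (a representative on [0,1] of) f o l_tau, i.e. prod_tau alpha_n:
    on closure(I_{n}^{k}) it is alpha_{2^(n-1)+k-1} (paper, 1-based) linearly
    reparametrized, and it is x on the Cantor set. *)
Definition IsTauProd {X : TopSpace} (x : X) (a : nat -> R -> X) (p : R -> X) : Prop :=
  (forall (n k : nat) t, (k < 2 ^ n)%nat ->
      Ileft n k <= t <= Iright n k ->
      p t = a (2 ^ n + k - 1)%nat ((t - Ileft n k) * 3 ^ (n + 1)))
  /\ (forall t, I01 t ->
      (forall (n k : nat), (k < 2 ^ n)%nat -> ~ (Ileft n k < t < Iright n k)) ->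
      p t = x).

Definition bijective_nat (phi : nat -> nat) : Prop :=
  (forall m n, phi m = phi n -> m = n) /\ (forall m, exists n, phi n = m).

Definition transf_pi1_comm {X : TopSpace} (x : X) : Prop :=
  forall a phi, null_seq x a -> bijective_nat phi ->
    forall p q, IsTauProd x a p -> IsTauProd x (fun n => a (phi n)) q -> phtpy p q.

Definition wd_inf_products {X : TopSpace} (x : X) : Prop :=
  forall a b, null_seq x a -> null_seq x b -> (forall n, phtpy (a n) (b n)) ->
    forall p q, IsInfProd x a p -> IsInfProd x b q -> phtpy p q.

Definition wd_transf_products {X : TopSpace} (x : X) : Prop :=
  forall a b, null_seq x a -> null_seq x b -> (forall n, phtpy (a n) (b n)) ->
    forall p q, IsTauProd x a p -> IsTauProd x b q -> phtpy p q.

Definition const_path {X : TopSpace} (x : X) : R -> X := fun _ => x.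

Definition homotopically_hausdorff {X : TopSpace} (x : X) : Prop :=
  forall a, is_loop x a -> ~ phtpy a (const_path x) ->
    exists U, is_open X U /\ U x /\
      forall b, is_loop x b -> (forall t, I01 t -> U (b t)) -> ~ phtpy b a.

Definition first_countable_at {X : TopSpace} (x : X) : Prop :=
  exists B : nat -> X -> Prop,
    (forall n, is_open X (B n) /\ B n x) /\
    (forall U, is_open X U -> U x -> exists n, forall z, B n z -> U z).

(* An infinite product [prod a] is, after a monotone reparametrisation of [0,1], the
   transfinite product of the sequence that puts [a n] on the rightmost middle-thirds
   interval of level [n] and constant loops elsewhere; conversely a transfinite product is
   an infinite product of its pieces on the blocks [[1 - 3^-n, 1 - 3^-(n+1)]].  So
   well-defined transfinite products give well-defined infinite ones, and conversely
   transfinite commutativity lets one move the loops to be replaced onto the rightmost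
   chain, where infinite products control them.

   If [x] has a countable basis and a nontrivial loop had representatives in every
   neighbourhood, a null-sequence of them and its shift would have homotopic transfinite
   products, which makes the loop trivial.  Conversely, if [X] is homotopically Hausdorff
   at [x], the alternating product [a0 b0^-1 a1 b1^-1 ...] is null-homotopic, since
   cancelling its first pairs leaves loops in any neighbourhood of [x]; commutativity
   rearranges it into [prod a] followed by [(prod b)^-1], hence [prod a ~ prod b]. *)

From Stdlib Require Import Reals Lra Lia Arith ZArith.
From Stdlib Require Import Classical ClassicalEpsilon FunctionalExtensionality.
Open Scope R_scope.

(** * Real reparametrisations of the unit interval *)

Definition cont1 (f : R -> R) : Prop :=
  forall t, I01 t -> forall e, e > 0 -> exists d, d > 0 /\
    forall t', I01 t' -> Rabs (t' - t) < d -> Rabs (f t' - f t) < e.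

Definition cont2 (f : R -> R -> R) : Prop :=
  forall s t, I01 s -> I01 t -> forall e, e > 0 -> exists d, d > 0 /\
    forall s' t', I01 s' -> I01 t' -> Rabs (s' - s) < d -> Rabs (t' - t) < d ->
      Rabs (f s' t' - f s t) < e.

Definition into01 (f : R -> R) : Prop := forall t, I01 t -> I01 (f t).

Lemma Rmin_lt_l a b c : a < Rmin b c -> a < b.
Proof. intros; eapply Rlt_le_trans; [exact H | apply Rmin_l]. Qed.

Lemma Rmin_lt_r a b c : a < Rmin b c -> a < c.
Proof. intros; eapply Rlt_le_trans; [exact H | apply Rmin_r]. Qed.

Lemma Rdiv_le_0_compat a b : 0 <= a -> 0 < b -> 0 <= a / b.
Proof. intros; unfold Rdiv; apply Rmult_le_pos; [auto | left; apply Rinv_0_lt_compat; auto]. Qed.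

Lemma I01_0 : I01 0. Proof. unfold I01; lra. Qed.
Lemma I01_1 : I01 1. Proof. unfold I01; lra. Qed.
#[global] Hint Resolve I01_0 I01_1 : core.

Lemma into01_id : into01 (fun t => t). Proof. intros t H; exact H. Qed.
Lemma into01_const c : I01 c -> into01 (fun _ => c). Proof. intros H t _; exact H. Qed.

Lemma cont1_id : cont1 (fun t => t).
Proof. intros t _ e He; exists e; split; auto. Qed.

Lemma cont1_const c : cont1 (fun _ => c).
Proof. intros t _ e He; exists 1; split; [lra|]. intros; rewrite Rminus_diag, Rabs_R0; lra. Qed.

Lemma cont1_lin a b : cont1 (fun t => a * t + b).
Proof.
  intros t _ e He. pose proof (Rabs_pos a).
  exists (e / (Rabs a + 1)). split; [apply Rdiv_lt_0_compat; lra|].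
  intros t' _ Ht.
  replace (a * t' + b - (a * t + b)) with (a * (t' - t)) by ring.
  rewrite Rabs_mult. pose proof (Rabs_pos (t' - t)).
  apply Rle_lt_trans with ((Rabs a + 1) * Rabs (t' - t)); [nra|].
  apply Rlt_le_trans with ((Rabs a + 1) * (e / (Rabs a + 1))).
  - apply Rmult_lt_compat_l; lra.
  - right; field; lra.
Qed.

Lemma cont1_plus f g : cont1 f -> cont1 g -> cont1 (fun t => f t + g t).
Proof.
  intros Hf Hg t Ht e He.
  destruct (Hf t Ht (e/2)) as [d1 [Hd1 H1]]; [lra|].
  destruct (Hg t Ht (e/2)) as [d2 [Hd2 H2]]; [lra|].
  exists (Rmin d1 d2); split; [apply Rmin_glb_lt; auto|].
  intros t' Ht' Hd.
  specialize (H1 t' Ht' (Rmin_lt_l _ _ _ Hd)). specialize (H2 t' Ht' (Rmin_lt_r _ _ _ Hd)).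
  replace (f t' + g t' - (f t + g t)) with ((f t' - f t) + (g t' - g t)) by ring.
  eapply Rle_lt_trans; [apply Rabs_triang | lra].
Qed.

Lemma cont1_scal c f : cont1 f -> cont1 (fun t => c * f t).
Proof.
  intros Hf t Ht e He. pose proof (Rabs_pos c) as Hc.
  destruct (Hf t Ht (e / (Rabs c + 1))) as [d [Hd H]]; [apply Rdiv_lt_0_compat; lra|].
  exists d; split; auto. intros t' Ht' Hd'.
  replace (c * f t' - c * f t) with (c * (f t' - f t)) by ring.
  rewrite Rabs_mult. specialize (H t' Ht' Hd'). pose proof (Rabs_pos (f t' - f t)).
  apply Rle_lt_trans with ((Rabs c + 1) * Rabs (f t' - f t)); [nra|].
  apply Rlt_le_trans with ((Rabs c + 1) * (e / (Rabs c + 1))).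
  - apply Rmult_lt_compat_l; lra.
  - right; field; lra.
Qed.

Lemma cont1_minus f g : cont1 f -> cont1 g -> cont1 (fun t => f t - g t).
Proof.
  intros Hf Hg. replace (fun t => f t - g t) with (fun t => f t + (-1) * g t)
    by (apply functional_extensionality; intros; ring).
  apply cont1_plus; auto. apply cont1_scal; auto.
Qed.

Definition clamp (u : R) : R := Rmax 0 (Rmin 1 u).

Ltac solve_clamp := unfold clamp, Rmax, Rmin; repeat destruct Rle_dec; try lra.

Lemma clamp_lip u v : Rabs (clamp u - clamp v) <= Rabs (u - v).
Proof. solve_clamp; unfold Rabs; repeat destruct Rcase_abs; lra. Qed.

Lemma clamp_I01 u : I01 (clamp u).
Proof. unfold I01; solve_clamp. Qed.

Lemma clamp_id u : I01 u -> clamp u = u.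
Proof. unfold I01; intros; solve_clamp. Qed.

Lemma clamp_le0 u : u <= 0 -> clamp u = 0.
Proof. intros; solve_clamp. Qed.

Lemma clamp_ge1 u : 1 <= u -> clamp u = 1.
Proof. intros; solve_clamp. Qed.

Lemma cont1_clamp_lin a b : cont1 (fun t => clamp (a * t + b)).
Proof.
  intros t Ht e He. destruct (cont1_lin a b t Ht e He) as [d [Hd H]].
  exists d; split; auto. intros t' Ht' Hd'.
  eapply Rle_lt_trans; [apply clamp_lip | apply H; auto].
Qed.

Lemma into01_clamp_lin a b : into01 (fun t => clamp (a * t + b)).
Proof. intros t _; apply clamp_I01. Qed.

Lemma cont2_fst f : cont1 f -> cont2 (fun s _ => f s).
Proof.
  intros Hf s t Hs _ e He. destruct (Hf s Hs e He) as [d [Hd H]].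
  exists d; split; auto.
Qed.

Lemma cont2_snd f : cont1 f -> cont2 (fun _ t => f t).
Proof.
  intros Hf s t _ Ht e He. destruct (Hf t Ht e He) as [d [Hd H]].
  exists d; split; auto.
Qed.

(* The convex combination is continuous because all terms stay in [0,1]. *)
Lemma cont2_comb f g : cont1 f -> cont1 g -> into01 f -> into01 g ->
  cont2 (fun s t => (1 - s) * f t + s * g t).
Proof.
  intros Hf Hg If Ig s t Hs Ht e He.
  destruct (Hf t Ht (e/4)) as [d1 [Hd1 H1]]; [lra|].
  destruct (Hg t Ht (e/4)) as [d2 [Hd2 H2]]; [lra|].
  exists (Rmin (Rmin d1 d2) (e/4)); split.
  { apply Rmin_glb_lt; [apply Rmin_glb_lt|]; lra. }
  intros s' t' Hs' Ht' Hds Hdt.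
  specialize (H1 t' Ht' (Rmin_lt_l _ _ _ (Rmin_lt_l _ _ _ Hdt))).
  specialize (H2 t' Ht' (Rmin_lt_r _ _ _ (Rmin_lt_l _ _ _ Hdt))).
  pose proof (Rmin_lt_r _ _ _ Hds) as A3.
  pose proof (If t Ht) as Ft. pose proof (Ig t Ht) as Gt. unfold I01 in *.
  replace ((1 - s') * f t' + s' * g t' - ((1 - s) * f t + s * g t)) with
    ((1 - s') * (f t' - f t) + s' * (g t' - g t) + (s - s') * f t + (s' - s) * g t) by ring.
  revert H1 H2 A3. unfold Rabs. repeat destruct Rcase_abs; intros; nra.
Qed.

Lemma comb_I01 a b s : I01 s -> I01 a -> I01 b -> I01 ((1 - s) * a + s * b).
Proof. unfold I01; intros; nra. Qed.

(* The image of a point [t] determines two preimages [t1 <= t <= t2] whose images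
   bracket [f t] within [e/2]; monotonicity then controls everything in between. *)
Lemma cont1_monotone_onto (f : R -> R) :
  into01 f ->
  (forall a b, I01 a -> I01 b -> a <= b -> f a <= f b) ->
  (forall y, I01 y -> exists t, I01 t /\ f t = y) ->
  cont1 f.
Proof.
  intros If Mf Sf t Ht e He.
  pose proof (If t Ht) as Ft.
  destruct (Sf (Rmax 0 (f t - e/2))) as [t1 [Ht1 E1]].
  { unfold I01, Rmax in *; destruct Rle_dec; lra. }
  destruct (Sf (Rmin 1 (f t + e/2))) as [t2 [Ht2 E2]].
  { unfold I01, Rmin in *; destruct Rle_dec; lra. }
  assert (L : 0 < f t -> t1 < t).
  { intros Hpos. destruct (Rlt_le_dec t1 t); auto. exfalso.
    pose proof (Mf t t1 Ht Ht1 r). rewrite E1 in H. unfold Rmax in H; destruct Rle_dec; lra. }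
  assert (U : f t < 1 -> t < t2).
  { intros Hlt. destruct (Rlt_le_dec t t2); auto. exfalso.
    pose proof (Mf t2 t Ht2 Ht r). rewrite E2 in H. unfold Rmin in H; destruct Rle_dec; lra. }
  exists (Rmin (if Rlt_dec 0 (f t) then t - t1 else 1)
               (if Rlt_dec (f t) 1 then t2 - t else 1)).
  split.
  { apply Rmin_glb_lt; destruct Rlt_dec as [P|P]; try lra;
      first [specialize (L P) | specialize (U P)]; lra. }
  intros s Hs Hd.
  pose proof (Rmin_lt_l _ _ _ Hd) as D1. pose proof (Rmin_lt_r _ _ _ Hd) as D2.
  assert (A : f t - e/2 <= f s).
  { destruct (Rle_dec t s). { pose proof (Mf t s Ht Hs r); lra. }
    destruct (Rlt_dec 0 (f t)) as [P|P]; [|pose proof (If s Hs); unfold I01 in *; lra].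
    assert (t1 <= s) by (revert D1; unfold Rabs; destruct Rcase_abs; lra).
    pose proof (Mf t1 s Ht1 Hs H). rewrite E1 in H0. pose proof (Rmax_r 0 (f t - e/2)). lra. }
  assert (B : f s <= f t + e/2).
  { destruct (Rle_dec s t). { pose proof (Mf s t Hs Ht r); lra. }
    destruct (Rlt_dec (f t) 1) as [P|P]; [|pose proof (If s Hs); unfold I01 in *; lra].
    assert (s <= t2) by (revert D2; unfold Rabs; destruct Rcase_abs; lra).
    pose proof (Mf s t2 Hs Ht2 H). rewrite E2 in H0. pose proof (Rmin_r 1 (f t + e/2)). lra. }
  unfold Rabs; destruct Rcase_abs; lra.
Qed.

(** * Continuity of maps into [X] and path homotopy *)

Lemma cont01_comp {X : TopSpace} (p : R -> X) (h : R -> R) :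
  cont01 p -> cont1 h -> into01 h -> cont01 (fun t => p (h t)).
Proof.
  intros Hp Hh Hi U HU t Ht HUt.
  destruct (Hp U HU (h t) (Hi t Ht) HUt) as [e [He H]].
  destruct (Hh t Ht e He) as [d [Hd H2]].
  exists d; split; auto.
Qed.

Lemma cont01sq_comp1 {X : TopSpace} (p : R -> X) (phi : R -> R -> R) :
  cont01 p -> cont2 phi -> (forall s t, I01 s -> I01 t -> I01 (phi s t)) ->
  cont01sq (fun s t => p (phi s t)).
Proof.
  intros Hp Hphi Hi U HU s t Hs Ht HUst.
  destruct (Hp U HU (phi s t) (Hi s t Hs Ht) HUst) as [e [He H]].
  destruct (Hphi s t Hs Ht e He) as [d [Hd H2]].
  exists d; split; [auto|]. intros; apply H; auto.
Qed.

Lemma cont01sq_comp2 {X : TopSpace} (G : R -> R -> X) (f g : R -> R -> R) :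
  cont01sq G -> cont2 f -> cont2 g ->
  (forall s t, I01 s -> I01 t -> I01 (f s t)) ->
  (forall s t, I01 s -> I01 t -> I01 (g s t)) ->
  cont01sq (fun s t => G (f s t) (g s t)).
Proof.
  intros HG Hf Hg If Ig U HU s t Hs Ht HUst.
  destruct (HG U HU (f s t) (g s t) (If s t Hs Ht) (Ig s t Hs Ht) HUst) as [e [He H]].
  destruct (Hf s t Hs Ht e He) as [d1 [Hd1 H1]].
  destruct (Hg s t Hs Ht e He) as [d2 [Hd2 H2]].
  exists (Rmin d1 d2); split; [apply Rmin_glb_lt; auto|].
  intros s' t' Hs' Ht' A B.
  apply H; auto; [apply H1 | apply H2]; auto;
    first [eapply Rmin_lt_l; eassumption | eapply Rmin_lt_r; eassumption].
Qed.

Lemma cont01sq_swap {X : TopSpace} (F : R -> R -> X) :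
  cont01sq F -> cont01sq (fun s t => F t s).
Proof.
  intros HF U HU s t Hs Ht HUt. destruct (HF U HU t s Ht Hs HUt) as [e [He H]].
  exists e; split; auto.
Qed.

Lemma cont01sq_near_side {X : TopSpace} (F : R -> R -> X) (P : R -> Prop) U s t :
  cont01sq F -> is_open X U -> I01 s -> I01 t ->
  (U (F s t) \/ exists d, d > 0 /\ forall s', Rabs (s' - s) < d -> ~ P s') ->
  exists e, e > 0 /\ forall s' t', I01 s' -> I01 t' -> Rabs (s' - s) < e ->
    Rabs (t' - t) < e -> P s' -> U (F s' t').
Proof.
  intros HF HU Hs Ht [HUt | [d [Hd Hn]]].
  - destruct (HF U HU s t Hs Ht HUt) as [e [He H]]. exists e; split; auto.
  - exists d; split; auto. intros s' t' _ _ Hs' _ Ps'. exfalso; exact (Hn s' Hs' Ps').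
Qed.

Lemma Rabs_lt_sides s c : s <> c -> exists d, d > 0 /\
  forall s', Rabs (s' - s) < d -> (s < c -> s' < c) /\ (c < s -> c < s').
Proof.
  intros Hsc. exists (Rabs (s - c)). split; [apply Rabs_pos_lt; lra|].
  intros s'. unfold Rabs; repeat destruct Rcase_abs; lra.
Qed.

Lemma cont01sq_paste {X : TopSpace} (F1 F2 : R -> R -> X) c :
  cont01sq F1 -> cont01sq F2 -> (forall t, I01 t -> F1 c t = F2 c t) ->
  cont01sq (fun s t => if Rle_dec s c then F1 s t else F2 s t).
Proof.
  intros H1 H2 Ec U HU s t Hs Ht HUst.
  assert (Sides : (U (F1 s t) \/ exists d, d > 0 /\ forall s', Rabs (s' - s) < d -> ~ s' <= c) /\
                  (U (F2 s t) \/ exists d, d > 0 /\ forall s', Rabs (s' - s) < d -> ~ ~ s' <= c)).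
  { destruct (Req_dec s c) as [-> | Ne].
    - destruct Rle_dec; [|lra]. rewrite <- Ec by auto. auto.
    - destruct (Rabs_lt_sides s c Ne) as [d [Hd Hsd]].
      destruct Rle_dec as [Le | Gt]; split; auto; right; exists d; split; auto;
        intros s' Hs'; destruct (Hsd s' Hs'); lra. }
  destruct Sides as [S1 S2].
  destruct (cont01sq_near_side F1 _ U s t H1 HU Hs Ht S1) as [e1 [He1 E1]].
  destruct (cont01sq_near_side F2 _ U s t H2 HU Hs Ht S2) as [e2 [He2 E2]].
  exists (Rmin e1 e2); split; [apply Rmin_glb_lt; auto|].
  intros s' t' Hs' Ht' A B.
  pose proof (Rmin_lt_l _ _ _ A). pose proof (Rmin_lt_r _ _ _ A).
  pose proof (Rmin_lt_l _ _ _ B). pose proof (Rmin_lt_r _ _ _ B).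
  destruct (Rle_dec s' c); [apply E1 | apply E2]; auto.
Qed.

Lemma cont01sq_paste_snd {X : TopSpace} (F1 F2 : R -> R -> X) c :
  cont01sq F1 -> cont01sq F2 -> (forall s, I01 s -> F1 s c = F2 s c) ->
  cont01sq (fun s t => if Rle_dec t c then F1 s t else F2 s t).
Proof.
  intros H1 H2 Ec.
  apply (cont01sq_swap (fun t s => if Rle_dec t c then F1 s t else F2 s t)).
  apply cont01sq_paste; auto; apply cont01sq_swap; auto.
Qed.

Lemma cont01sq_const_fst {X : TopSpace} (p : R -> X) : cont01 p -> cont01sq (fun _ t => p t).
Proof.
  intros Hp. apply (cont01sq_comp1 p (fun _ t => t)); auto using cont2_snd, cont1_id.
Qed.

Lemma phtpy_ext {X : TopSpace} (a b a' b' : R -> X) :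
  (forall t, I01 t -> a t = a' t) -> (forall t, I01 t -> b t = b' t) ->
  phtpy a b -> phtpy a' b'.
Proof.
  intros Ea Eb [H [Hc [H0 [H1 He]]]]. exists H; repeat split; auto.
  - intros t Ht; rewrite <- Ea; auto.
  - intros t Ht; rewrite <- Eb; auto.
  - rewrite <- Ea; auto. apply He; auto.
  - rewrite <- Ea; auto. apply He; auto.
Qed.

Lemma phtpy_refl {X : TopSpace} (a : R -> X) : cont01 a -> phtpy a a.
Proof.
  intros Ha. exists (fun s t => a t). repeat split; auto. apply cont01sq_const_fst; auto.
Qed.

Lemma phtpy_sym {X : TopSpace} (a b : R -> X) : phtpy a b -> phtpy b a.
Proof.
  intros [H [Hc [H0 [H1 He]]]].
  exists (fun s t => H ((-1) * s + 1) t). repeat split.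
  - apply (cont01sq_comp2 H (fun s _ => (-1) * s + 1) (fun _ t => t)); auto.
    + apply cont2_fst, cont1_lin.
    + apply cont2_snd, cont1_id.
    + intros s t Hs _; unfold I01 in *; lra.
  - intros t Ht. replace (-1 * 0 + 1) with 1 by ring. auto.
  - intros t Ht. replace (-1 * 1 + 1) with 0 by ring. auto.
  - destruct (He (-1 * s + 1)) as [E0 _]; [unfold I01 in *; lra|].
    rewrite E0, <- (proj1 (He 1 I01_1)), H1; auto.
  - destruct (He (-1 * s + 1)) as [_ E0]; [unfold I01 in *; lra|].
    rewrite E0, <- (proj2 (He 1 I01_1)), H1; auto.
Qed.

Lemma phtpy_trans {X : TopSpace} (a b c : R -> X) : phtpy a b -> phtpy b c -> phtpy a c.
Proof.
  intros [H [Hc [H0 [H1 He]]]] [K [Kc [K0 [K1 Ke]]]].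
  exists (fun s t => if Rle_dec s (1/2) then H (clamp (2 * s + 0)) t else K (clamp (2 * s + -1)) t).
  repeat split.
  - apply cont01sq_paste.
    + apply (cont01sq_comp2 H (fun s _ => clamp (2 * s + 0)) (fun _ t => t)); auto using clamp_I01.
      apply cont2_fst, cont1_clamp_lin. apply cont2_snd, cont1_id.
    + apply (cont01sq_comp2 K (fun s _ => clamp (2 * s + -1)) (fun _ t => t)); auto using clamp_I01.
      apply cont2_fst, cont1_clamp_lin. apply cont2_snd, cont1_id.
    + intros t Ht. rewrite clamp_ge1, clamp_le0 by lra. rewrite H1, K0; auto.
  - intros t Ht. destruct Rle_dec; [|lra]. rewrite clamp_le0 by lra. auto.
  - intros t Ht. destruct Rle_dec; [lra|]. rewrite clamp_ge1 by lra. auto.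
  - assert (Hab : b 0 = a 0) by (rewrite <- H1, (proj1 (He 1 I01_1)); auto).
    destruct Rle_dec.
    + apply He, clamp_I01.
    + rewrite (proj1 (Ke _ (clamp_I01 _))), <- K0, <- Hab; auto.
  - assert (Hab : b 1 = a 1) by (rewrite <- H1, (proj2 (He 1 I01_1)); auto).
    destruct Rle_dec.
    + apply He, clamp_I01.
    + rewrite (proj2 (Ke _ (clamp_I01 _))), <- K0, <- Hab; auto.
Qed.

Lemma phtpy_reparam {X : TopSpace} (p : R -> X) (h : R -> R) :
  cont01 p -> cont1 h -> into01 h -> h 0 = 0 -> h 1 = 1 ->
  phtpy (fun t => p (h t)) p.
Proof.
  intros Hp Hh Ih H0 H1.
  exists (fun s t => p ((1 - s) * h t + s * t)). repeat split.
  - apply cont01sq_comp1; auto.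
    + apply cont2_comb; auto using cont1_id, into01_id.
    + intros; apply comb_I01; auto.
  - intros t _; f_equal; ring.
  - intros t _; f_equal; ring.
  - f_equal; rewrite H0; ring.
  - f_equal; rewrite H1; ring.
Qed.

Lemma phtpy_reparam_null {X : TopSpace} (p : R -> X) (h : R -> R) :
  cont01 p -> cont1 h -> into01 h -> h 0 = 0 -> h 1 = 0 ->
  phtpy (fun t => p (h t)) (fun _ => p 0).
Proof.
  intros Hp Hh Ih H0 H1.
  exists (fun s t => p ((1 - s) * h t + s * 0)). repeat split.
  - apply cont01sq_comp1; auto.
    + apply cont2_comb; auto using cont1_const, into01_const.
    + intros; apply comb_I01; auto.
  - intros t _; f_equal; ring.
  - intros t _; f_equal; ring.
  - f_equal; rewrite H0; ring.
  - f_equal; rewrite H1; ring.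
Qed.

Lemma phtpy_reparam_eq {X : TopSpace} (p P : R -> X) (h : R -> R) :
  cont01 P -> cont1 h -> into01 h -> h 0 = 0 -> h 1 = 1 ->
  (forall t, I01 t -> p t = P (h t)) -> phtpy p P.
Proof.
  intros CP Ch Ih H0 H1 E. apply (phtpy_ext (fun t => P (h t)) P); auto.
  - intros; symmetry; auto.
  - apply phtpy_reparam; auto.
Qed.

Lemma phtpy_in_square {X : TopSpace} (G : R -> R -> X) (s0 t0 s1 t1 : R -> R) :
  cont01sq G -> cont1 s0 -> cont1 t0 -> cont1 s1 -> cont1 t1 ->
  into01 s0 -> into01 t0 -> into01 s1 -> into01 t1 ->
  s0 0 = s1 0 -> t0 0 = t1 0 -> s0 1 = s1 1 -> t0 1 = t1 1 ->
  phtpy (fun t => G (s0 t) (t0 t)) (fun t => G (s1 t) (t1 t)).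
Proof.
  intros HG C1 C2 C3 C4 I1 I2 I3 I4 E1 E2 E3 E4.
  exists (fun s t => G ((1 - s) * s0 t + s * s1 t) ((1 - s) * t0 t + s * t1 t)).
  repeat split.
  - apply cont01sq_comp2; auto; try (apply cont2_comb; auto); intros; apply comb_I01; auto.
  - intros t _; f_equal; ring.
  - intros t _; f_equal; ring.
  - rewrite <- E1, <- E2; f_equal; ring.
  - rewrite <- E3, <- E4; f_equal; ring.
Qed.

Lemma phtpy_local {X : TopSpace} (p1 p2 : R -> X) (l r : R) :
  cont01 p1 -> 0 <= l -> l < r -> r <= 1 ->
  (forall t, I01 t -> (t <= l \/ r <= t) -> p1 t = p2 t) ->
  phtpy (fun u => p1 (l + u * (r - l))) (fun u => p2 (l + u * (r - l))) ->
  phtpy p1 p2.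
Proof.
  intros Hp Hl Hlr Hr Eq [K [Kc [K0 [K1 Ke]]]].
  set (u := fun t => clamp (/ (r - l) * t + - l / (r - l))).
  assert (Iu : forall t, l <= t <= r -> u t = (t - l) / (r - l)).
  { intros t Ht. unfold u. rewrite clamp_id; [field; lra|].
    split; [apply (Rmult_le_reg_l (r - l)) | apply (Rmult_le_reg_l (r - l))]; try lra;
      field_simplify; lra. }
  assert (Kt : forall t, l <= t <= r -> l + u t * (r - l) = t).
  { intros t Ht. rewrite Iu by auto. field. lra. }
  assert (Kl : forall s, I01 s -> K s 0 = p1 l).
  { intros s Hs. rewrite (proj1 (Ke s Hs)). f_equal; ring. }
  assert (Kr : forall s, I01 s -> K s 1 = p1 r).
  { intros s Hs. rewrite (proj2 (Ke s Hs)). f_equal; ring. }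
  assert (Ul : u l = 0) by (rewrite Iu by lra; unfold Rdiv; ring).
  assert (Ur : u r = 1) by (rewrite Iu by lra; field; lra).
  set (inner := fun s t => if Rle_dec t r then K s (u t) else p1 t).
  exists (fun s t => if Rle_dec t l then p1 t else inner s t). repeat split.
  - apply cont01sq_paste_snd.
    + apply cont01sq_const_fst; auto.
    + apply cont01sq_paste_snd.
      * apply (cont01sq_comp2 K (fun s _ => s) (fun _ t => u t)); auto.
        -- apply cont2_fst, cont1_id.
        -- apply cont2_snd, cont1_clamp_lin.
        -- intros; apply clamp_I01.
      * apply cont01sq_const_fst; auto.
      * intros s Hs. rewrite Ur. auto.
    + intros s Hs. unfold inner. destruct Rle_dec; [|lra]. rewrite Ul, Kl; auto.
  - intros t Ht. unfold inner. destruct Rle_dec; [auto|]. destruct Rle_dec; [|auto].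
    rewrite K0 by apply clamp_I01. rewrite Kt; [auto | lra].
  - intros t Ht. unfold inner. destruct Rle_dec; [apply Eq; auto|]. destruct Rle_dec.
    + rewrite K1 by apply clamp_I01. rewrite Kt; [auto | lra].
    + apply Eq; auto; lra.
  - destruct Rle_dec; [auto | lra].
  - unfold inner. destruct Rle_dec; [auto|]. destruct Rle_dec; [|auto].
    assert (r = 1) by lra. subst r. rewrite Ur, Kr; auto.
Qed.

(** * Loops and null-sequences *)

Lemma null_loop {X : TopSpace} (x : X) a n : null_seq x a -> is_loop x (a n).
Proof. intros [H _]; auto. Qed.

Lemma loop_cont {X : TopSpace} (x : X) a : is_loop x a -> cont01 a.
Proof. intros [H _]; auto. Qed.

Lemma const_loop {X : TopSpace} (x : X) : is_loop x (const_path x).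
Proof. repeat split. intros U HU t Ht HUt. exists 1; split; [lra|]. intros; auto. Qed.

Lemma phtpy_const {X : TopSpace} (x : X) : phtpy (const_path x) (const_path x).
Proof. apply phtpy_refl, (loop_cont x), const_loop. Qed.

Definition rev {X : TopSpace} (a : R -> X) : R -> X := fun t => a (1 - t).

Lemma rev_loop {X : TopSpace} (x : X) a : is_loop x a -> is_loop x (rev a).
Proof.
  intros [C [A0 A1]]. repeat split; unfold rev.
  - replace (fun t => a (1 - t)) with (fun t => a ((-1) * t + 1))
      by (apply functional_extensionality; intros; f_equal; ring).
    apply cont01_comp; auto using cont1_lin. intros t Ht; unfold I01 in *; lra.
  - rewrite Rminus_0_r; auto.
  - rewrite Rminus_diag; auto.
Qed.

Lemma loops_near_ends {X : TopSpace} (x : X) (a : nat -> R -> X) (U : X -> Prop) :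
  (forall i, is_loop x (a i)) -> is_open X U -> U x ->
  forall N, exists d, d > 0 /\
    forall i, (i < N)%nat -> forall u, I01 u -> (u < d \/ u > 1 - d) -> U (a i u).
Proof.
  intros La HU Ux N. induction N as [|N [d [Hd IH]]].
  - exists 1; split; [lra|]. intros; lia.
  - destruct (La N) as [C [A0 A1]].
    destruct (C U HU 0 I01_0) as [e0 [He0 H0]]; [rewrite A0; auto|].
    destruct (C U HU 1 I01_1) as [e1 [He1 H1]]; [rewrite A1; auto|].
    exists (Rmin d (Rmin e0 e1)). split; [repeat apply Rmin_glb_lt; auto|].
    intros i Hi u Hu Hud.
    pose proof (Rmin_l d (Rmin e0 e1)). pose proof (Rmin_r d (Rmin e0 e1)).
    pose proof (Rmin_l e0 e1). pose proof (Rmin_r e0 e1).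
    destruct (Nat.eq_dec i N) as [-> | Ne].
    + destruct Hud as [Hud | Hud]; unfold I01 in Hu.
      * apply H0; auto. rewrite Rminus_0_r, Rabs_right; lra.
      * apply H1; auto. rewrite Rabs_left1; lra.
    + apply IH; [lia | auto | destruct Hud; [left | right]; lra].
Qed.


Definition cont01_at {X : TopSpace} (f : R -> X) (t : R) : Prop :=
  forall U, is_open X U -> U (f t) ->
    exists eps, eps > 0 /\ forall s, I01 s -> Rabs (s - t) < eps -> U (f s).

Lemma cont01_of_at {X : TopSpace} (f : R -> X) : (forall t, I01 t -> cont01_at f t) -> cont01 f.
Proof. intros H U HU t Ht; apply H; auto. Qed.

Lemma cont01_at_piece {X : TopSpace} (alpha p : R -> X) (l c t : R) :
  cont01 alpha -> c > 0 -> l < t < l + / c ->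
  (forall s, l < s < l + / c -> p s = alpha ((s - l) * c)) -> cont01_at p t.
Proof.
  intros Ha Hc T Hp U HU HUt.
  assert (Ic : c * / c = 1) by (field; lra).
  assert (Iv : / c > 0) by (apply Rinv_0_lt_compat; lra).
  rewrite (Hp t T) in HUt.
  assert (Iu : I01 ((t - l) * c)) by (unfold I01; split; nra).
  destruct (Ha U HU _ Iu HUt) as [e [He HA]].
  exists (Rmin (e / c) (Rmin (t - l) (l + / c - t))). split.
  { repeat apply Rmin_glb_lt; try lra. apply Rdiv_lt_0_compat; lra. }
  intros s Hs Hd.
  pose proof (Rmin_lt_l _ _ _ Hd) as D1.
  pose proof (Rmin_lt_l _ _ _ (Rmin_lt_r _ _ _ Hd)) as D2.
  pose proof (Rmin_lt_r _ _ _ (Rmin_lt_r _ _ _ Hd)) as D3.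
  assert (Ts : l < s < l + / c) by (revert D2 D3; unfold Rabs; destruct Rcase_abs; lra).
  rewrite (Hp s Ts). apply HA.
  - unfold I01; split; nra.
  - replace ((s - l) * c - (t - l) * c) with ((s - t) * c) by ring.
    rewrite Rabs_mult, (Rabs_right c) by lra.
    apply (Rmult_lt_compat_r c) in D1; [|lra].
    replace (e / c * c) with e in D1 by (field; lra). lra.
Qed.

(* Near a point where [p = x], all loops are small except finitely many, and those have
   intervals of length bounded below, so they are only met near their endpoints. *)
Lemma cont01_piecewise {X : TopSpace} (x : X) (a : nat -> R -> X) (J : Type) (valid : J -> Prop)
  (idx : J -> nat) (l c : J -> R) (p : R -> X) :
  null_seq x a ->
  (forall j, valid j -> c j > 0) ->
  (forall N, exists C, C > 0 /\ forall j, valid j -> (idx j < N)%nat -> c j <= C) ->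
  (forall j s, valid j -> l j < s < l j + / c j -> p s = a (idx j) ((s - l j) * c j)) ->
  (forall s, I01 s -> (forall j, valid j -> ~ (l j < s < l j + / c j)) -> p s = x) ->
  cont01 p.
Proof.
  intros [La Na] Cpos Cb H1 H2. apply cont01_of_at. intros t Ht.
  destruct (classic (exists j, valid j /\ l j < t < l j + / c j)) as [[j [Vj Tj]] | NJ].
  { apply (cont01_at_piece (a (idx j)) p (l j) (c j)); auto. apply La. }
  intros U HU HUt.
  assert (NJ' : forall j, valid j -> ~ (l j < t < l j + / c j)) by eauto.
  rewrite (H2 t Ht NJ') in HUt.
  destruct (Na U HU HUt) as [N HN].
  destruct (loops_near_ends x a U La HU HUt N) as [d [Hd Hdel]].
  destruct (Cb N) as [C [HC HCb]].
  exists (d / C). split; [apply Rdiv_lt_0_compat; lra|].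
  intros s Hs Hds.
  destruct (classic (exists j, valid j /\ l j < s < l j + / c j)) as [[j [Vj Tj]] | NS].
  2:{ rewrite (H2 s Hs); auto. intros j Vj Hj; apply NS; eauto. }
  pose proof (Cpos j Vj) as cj.
  assert (Ic : c j * / c j = 1) by (field; lra).
  rewrite (H1 j s Vj Tj).
  assert (Iu : I01 ((s - l j) * c j)) by (unfold I01; split; nra).
  destruct (le_lt_dec N (idx j)) as [Hge | Hlt]; [apply HN; auto|].
  apply Hdel; auto.
  assert (Hdc : d / C * c j <= d).
  { pose proof (HCb j Vj Hlt). unfold Rdiv. rewrite Rmult_assoc.
    rewrite <- (Rmult_1_r d) at 2. apply Rmult_le_compat_l; [lra|].
    apply (Rmult_le_reg_l C); [lra|]. rewrite <- Rmult_assoc, Rinv_r, Rmult_1_l, Rmult_1_r; lra. }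
  destruct (Rle_dec t (l j)) as [Tl | Tl].
  - left. assert (s - t < d / C) by (revert Hds; unfold Rabs; destruct Rcase_abs; lra).
    assert ((s - t) * c j < d / C * c j) by (apply Rmult_lt_compat_r; lra). nra.
  - right.
    assert (l j + / c j <= t)
      by (destruct (Rle_dec (l j + / c j) t); auto; exfalso; apply (NJ' j Vj); lra).
    assert (t - s < d / C) by (revert Hds; unfold Rabs; destruct Rcase_abs; lra).
    assert ((t - s) * c j < d / C * c j) by (apply Rmult_lt_compat_r; lra). nra.
Qed.
(** * The middle-thirds intervals and transfinite products *)
Definition tau_index (n k : nat) : nat := (2 ^ n + k - 1)%nat.

Lemma div2_add2 k p : Nat.div2 (k + 2 * p) = (Nat.div2 k + p)%nat.
Proof.
  pose proof (Nat.div2_odd (k + 2 * p)). pose proof (Nat.div2_odd k).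
  rewrite Nat.odd_add_mul_2 in H. destruct (Nat.odd k); simpl in *; lia.
Qed.

Lemma pow2_pos n : (1 <= 2 ^ n)%nat.
Proof. induction n; simpl; lia. Qed.

Lemma tern_lo n k : (k < 2 ^ n)%nat -> tern (S n) k = tern n k.
Proof.
  revert k; induction n; intros k Hk.
  - simpl in Hk. assert (k = 0%nat) by lia. subst; reflexivity.
  - change (tern (S (S n)) k) with ((if Nat.odd k then 1 else 0) + 3 * tern (S n) (Nat.div2 k))%nat.
    change (tern (S n) k) with ((if Nat.odd k then 1 else 0) + 3 * tern n (Nat.div2 k))%nat.
    rewrite IHn; auto. pose proof (Nat.div2_odd k). simpl in Hk.
    destruct (Nat.odd k); simpl in *; lia.
Qed.

Lemma tern_hi n k : (k < 2 ^ n)%nat -> tern (S n) (k + 2 ^ n) = (tern n k + 3 ^ n)%nat.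
Proof.
  revert k; induction n; intros k Hk.
  - simpl in Hk. assert (k = 0%nat) by lia. subst; reflexivity.
  - change (tern (S (S n)) (k + 2 ^ S n)) with
      ((if Nat.odd (k + 2 ^ S n) then 1 else 0) + 3 * tern (S n) (Nat.div2 (k + 2 ^ S n)))%nat.
    change (tern (S n) k) with ((if Nat.odd k then 1 else 0) + 3 * tern n (Nat.div2 k))%nat.
    change (2 ^ S n)%nat with (2 * 2 ^ n)%nat.
    rewrite Nat.odd_add_mul_2, div2_add2, IHn.
    + change (3 ^ S n)%nat with (3 * 3 ^ n)%nat. lia.
    + pose proof (Nat.div2_odd k). simpl in Hk. destruct (Nat.odd k); simpl in *; lia.
Qed.

Lemma lt_pow2_S n k : (k < 2 ^ S n)%nat ->
  (k < 2 ^ n)%nat \/ exists k0, (k0 < 2 ^ n)%nat /\ k = (k0 + 2 ^ n)%nat.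
Proof.
  intros H. simpl in H. destruct (lt_dec k (2 ^ n)); [left; auto|right].
  exists (k - 2 ^ n)%nat. lia.
Qed.

Lemma pow3_pos n : 0 < 3 ^ n. Proof. apply pow_lt; lra. Qed.
Lemma pow3_ge1 n : 1 <= 3 ^ n.
Proof. induction n; simpl; lra. Qed.

Lemma Ileft_eq n k : Ileft n k = (6 * INR (tern n k) + 1) / 3 ^ (n + 1).
Proof. unfold Ileft. rewrite plus_INR, !mult_INR. simpl INR. f_equal; ring. Qed.
Lemma Iright_eq n k : Iright n k = (6 * INR (tern n k) + 2) / 3 ^ (n + 1).
Proof. unfold Iright. rewrite plus_INR, !mult_INR. simpl INR. f_equal; ring. Qed.

Lemma pow3_S n : 3 ^ (S n + 1) = 3 * 3 ^ (n + 1).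
Proof. replace (S n + 1)%nat with (S (n+1)) by lia. reflexivity. Qed.

Lemma Iright_Ileft n k : Iright n k = Ileft n k + / 3 ^ (n + 1).
Proof. rewrite Ileft_eq, Iright_eq. field. pose proof (pow3_pos (n+1)); lra. Qed.

Lemma Ileft_lo n k : (k < 2 ^ n)%nat -> Ileft (S n) k = Ileft n k / 3.
Proof.
  intros H. rewrite !Ileft_eq, tern_lo, pow3_S by auto. field.
  pose proof (pow3_pos (n+1)); lra.
Qed.
Lemma Iright_lo n k : (k < 2 ^ n)%nat -> Iright (S n) k = Iright n k / 3.
Proof.
  intros H. rewrite !Iright_eq, tern_lo, pow3_S by auto. field.
  pose proof (pow3_pos (n+1)); lra.
Qed.
Lemma Ileft_hi n k : (k < 2 ^ n)%nat -> Ileft (S n) (k + 2 ^ n) = 2/3 + Ileft n k / 3.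
Proof.
  intros H. rewrite !Ileft_eq, tern_hi, pow3_S, plus_INR, pow_INR by auto. simpl INR.
  replace (1+1+1) with 3 by ring. rewrite pow_add. pose proof (pow3_pos n). simpl (3 ^ 1). field.
  lra.
Qed.
Lemma Iright_hi n k : (k < 2 ^ n)%nat -> Iright (S n) (k + 2 ^ n) = 2/3 + Iright n k / 3.
Proof.
  intros H. rewrite !Iright_eq, tern_hi, pow3_S, plus_INR, pow_INR by auto. simpl INR.
  replace (1+1+1) with 3 by ring. rewrite pow_add. pose proof (pow3_pos n). simpl (3 ^ 1). field.
  lra.
Qed.

Lemma Ileft_ge n k : / 3 ^ (n + 1) <= Ileft n k.
Proof.
  rewrite Ileft_eq. pose proof (pos_INR (tern n k)). pose proof (pow3_pos (n+1)).
  unfold Rdiv. rewrite <- (Rmult_1_l (/ 3 ^ (n+1))) at 1.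
  apply Rmult_le_compat_r; [left; apply Rinv_0_lt_compat; auto| lra].
Qed.
Lemma Ileft_pos n k : 0 < Ileft n k.
Proof. pose proof (Ileft_ge n k). pose proof (Rinv_0_lt_compat _ (pow3_pos (n+1))). lra. Qed.

Lemma Iright_le n k : (k < 2 ^ n)%nat -> Iright n k <= 1 - / 3 ^ (n + 1).
Proof.
  revert k; induction n; intros k Hk.
  - simpl in Hk. assert (k = 0%nat) by lia. subst. rewrite Iright_eq. simpl. lra.
  - destruct (lt_pow2_S n k Hk) as [H|[k0 [H ->]]].
    + rewrite Iright_lo by auto. pose proof (IHn k H). rewrite pow3_S.
      rewrite Rinv_mult. pose proof (Rinv_0_lt_compat _ (pow3_pos (n+1))). lra.
    + rewrite Iright_hi by auto. pose proof (IHn k0 H). rewrite pow3_S.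
      rewrite Rinv_mult. pose proof (Rinv_0_lt_compat _ (pow3_pos (n+1))). lra.
Qed.

Lemma Iright_left_third n k : (k < 2 ^ n)%nat -> Iright (S n) k <= 1/3.
Proof.
  intros H. rewrite Iright_lo by auto. pose proof (Iright_le n k H).
  pose proof (Rinv_0_lt_compat _ (pow3_pos (n+1))). lra.
Qed.
Lemma Ileft_right_third n k : (k < 2 ^ n)%nat -> 2/3 <= Ileft (S n) (k + 2 ^ n).
Proof. intros H. rewrite Ileft_hi by auto. pose proof (Ileft_pos n k). lra. Qed.

Lemma first_interval : Ileft 0 0 = 1/3 /\ Iright 0 0 = 2/3.
Proof. rewrite Ileft_eq, Iright_eq. simpl. split; field. Qed.

Lemma tau_intervals_disjoint n k n' k' t : (k < 2 ^ n)%nat -> (k' < 2 ^ n')%nat ->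
  Ileft n k < t < Iright n k -> Ileft n' k' <= t <= Iright n' k' -> n = n' /\ k = k'.
Proof.
  revert k n' k' t; induction n; intros k n' k' t Hk Hk' T1 T2.
  - simpl in Hk. assert (k = 0%nat) by lia. subst. destruct first_interval as [A B].
    destruct n' as [|n'].
    + simpl in Hk'. split; lia.
    + exfalso. destruct (lt_pow2_S n' k' Hk') as [H|[k0 [H ->]]].
      * pose proof (Iright_left_third n' k' H). lra.
      * pose proof (Ileft_right_third n' k0 H). lra.
  - destruct n' as [|n'].
    + exfalso. simpl in Hk'. assert (k' = 0%nat) by lia. subst. destruct first_interval as [A B].
      destruct (lt_pow2_S n k Hk) as [H|[k0 [H ->]]].
      * pose proof (Iright_left_third n k H). lra.
      * pose proof (Ileft_right_third n k0 H). lra.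
    + destruct (lt_pow2_S n k Hk) as [H|[k0 [H ->]]];
      destruct (lt_pow2_S n' k' Hk') as [H'|[k0' [H' ->]]].
      * pose proof (Iright_left_third n k H).
        rewrite Ileft_lo, Iright_lo in T1, T2 by auto.
        destruct (IHn k n' k' (3 * t) H H') as [-> ->]; auto; lra.
      * exfalso. pose proof (Iright_left_third n k H). pose proof (Ileft_right_third n' k0' H').
        lra.
      * exfalso. pose proof (Iright_left_third n' k' H'). pose proof (Ileft_right_third n k0 H).
        lra.
      * rewrite Ileft_hi, Iright_hi in T1, T2 by auto.
        destruct (IHn k0 n' k0' (3 * t - 2) H H') as [-> ->]; auto; lra.
Qed.

Lemma rightmost_interval n : Ileft n (2 ^ n - 1) = 1 - 2 / 3 ^ (n + 1) /\
  Iright n (2 ^ n - 1) = 1 - / 3 ^ (n + 1).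
Proof.
  induction n.
  - simpl. rewrite Ileft_eq, Iright_eq. simpl. split; field.
  - replace (2 ^ S n - 1)%nat with ((2 ^ n - 1) + 2 ^ n)%nat by
      (simpl; pose proof (pow2_pos n); lia).
    assert (H : (2 ^ n - 1 < 2 ^ n)%nat) by (pose proof (pow2_pos n); lia).
    rewrite Ileft_hi, Iright_hi, pow3_S by auto. destruct IHn as [A B]. rewrite A, B.
    pose proof (pow3_pos (n+1)). split; field; lra.
Qed.

Lemma leftmost_interval n : Ileft n 0 = / 3 ^ (n + 1) /\ Iright n 0 = 2 / 3 ^ (n + 1).
Proof.
  induction n.
  - rewrite Ileft_eq, Iright_eq. simpl. split; field.
  - assert (H : (0 < 2 ^ n)%nat) by (pose proof (pow2_pos n); lia).
    rewrite Ileft_lo, Iright_lo, pow3_S by auto. destruct IHn as [A B]. rewrite A, B.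
    pose proof (pow3_pos (n+1)). split; field; lra.
Qed.

Lemma tau_index_inj n k n' k' : (k < 2 ^ n)%nat -> (k' < 2 ^ n')%nat ->
  tau_index n k = tau_index n' k' -> n = n' /\ k = k'.
Proof.
  unfold tau_index. intros Hk Hk' E. pose proof (pow2_pos n). pose proof (pow2_pos n').
  destruct (lt_eq_lt_dec n n') as [[L|L]|L].
  - exfalso. assert (2 ^ S n <= 2 ^ n')%nat by (apply Nat.pow_le_mono_r; lia). simpl in H1. lia.
  - subst; split; lia.
  - exfalso. assert (2 ^ S n' <= 2 ^ n)%nat by (apply Nat.pow_le_mono_r; lia). simpl in H1. lia.
Qed.

Definition tau_level (i : nat) : nat := Nat.log2 (S i).

Lemma tau_level_index n k : (k < 2 ^ n)%nat -> tau_level (tau_index n k) = n.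
Proof.
  intros Hk. unfold tau_level, tau_index. pose proof (pow2_pos n). apply Nat.log2_unique; [lia|].
  simpl. lia.
Qed.

Lemma tau_index_surj i : exists n k, (k < 2 ^ n)%nat /\ i = tau_index n k.
Proof.
  destruct (Nat.log2_spec (S i)) as [A B]; [lia|].
  exists (Nat.log2 (S i)), (S i - 2 ^ Nat.log2 (S i))%nat. unfold tau_index. simpl in B. split; lia.
Qed.

Lemma tau_index_ge n k : (n <= tau_index n k)%nat.
Proof.
  unfold tau_index. assert (forall m, (S m <= 2 ^ m)%nat) by (induction m; simpl; lia).
  pose proof (H n). lia.
Qed.


Lemma tau_prod_on {X : TopSpace} (x : X) s p n k t : IsTauProd x s p -> (k < 2 ^ n)%nat ->
  Ileft n k <= t <= Iright n k -> p t = s (tau_index n k) ((t - Ileft n k) * 3 ^ (n + 1)).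
Proof. intros [H _] Hk Ht. apply H; auto. Qed.

Lemma tau_prod_off {X : TopSpace} (x : X) s p t : IsTauProd x s p -> I01 t ->
  (forall n k, (k < 2 ^ n)%nat -> ~ (Ileft n k < t < Iright n k)) -> p t = x.
Proof. intros [_ H] Ht N. apply H; auto. Qed.

Definition tau_prod {X : TopSpace} (x : X) (s : nat -> R -> X) (t : R) : X :=
  match excluded_middle_informative (exists nk : nat * nat, (snd nk < 2 ^ fst nk)%nat /\
        Ileft (fst nk) (snd nk) < t < Iright (fst nk) (snd nk)) with
  | left H => let nk := proj1_sig (constructive_indefinite_description _ H) in
      s (tau_index (fst nk) (snd nk)) ((t - Ileft (fst nk) (snd nk)) * 3 ^ (fst nk + 1))
  | right _ => x
  end.

Lemma tau_prod_spec {X : TopSpace} (x : X) s : (forall i, is_loop x (s i)) ->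
  IsTauProd x s (tau_prod x s).
Proof.
  intros Ls. split.
  - intros n k t Hk Ht. unfold tau_prod. destruct excluded_middle_informative as [H|H].
    + destruct (constructive_indefinite_description _ H) as [[n' k'] [Hk' T']]. simpl in *.
      destruct (tau_intervals_disjoint n' k' n k t) as [-> ->]; auto.
    + assert (t = Ileft n k \/ t = Iright n k).
      { destruct (Req_dec t (Ileft n k)); auto. destruct (Req_dec t (Iright n k)); auto.
        exfalso. apply H. exists (n, k). simpl. split; auto. lra. }
      destruct (Ls (2 ^ n + k - 1)%nat) as [_ [A0 A1]].
      destruct H0 as [->| ->].
      * rewrite Rminus_diag, Rmult_0_l; auto.
      * rewrite Iright_Ileft.
        replace ((Ileft n k + / 3 ^ (n + 1) - Ileft n k) * 3 ^ (n + 1)) with 1; auto.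
        field. pose proof (pow3_pos (n+1)); lra.
  - intros t Ht N. unfold tau_prod.
    destruct excluded_middle_informative as [[[n k] [Hk T]]|H]; auto.
    exfalso. apply (N n k); auto.
Qed.

Lemma tau_prod_cont {X : TopSpace} (x : X) s p : null_seq x s -> IsTauProd x s p -> cont01 p.
Proof.
  intros Ns Hp.
  apply (cont01_piecewise x s (nat * nat) (fun j => (snd j < 2 ^ fst j)%nat)
    (fun j => tau_index (fst j) (snd j))
           (fun j => Ileft (fst j) (snd j)) (fun j => 3 ^ (fst j + 1)) p Ns).
  - intros; apply pow3_pos.
  - intros N. exists (3 ^ (N + 1)). split; [apply pow3_pos|].
    intros [n k] Hk Hi. simpl in *. pose proof (tau_index_ge n k). apply Rle_pow; [lra|lia].
  - intros [n k] t Hk Ht. simpl in *. rewrite <- Iright_Ileft in Ht.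
    apply (tau_prod_on x s p n k t Hp Hk). lra.
  - intros t Ht N. apply (tau_prod_off x s p t Hp Ht). intros n k Hk T. apply (N (n, k) Hk). simpl.
    rewrite <- Iright_Ileft; auto.
Qed.

Lemma tau_prod_0 {X : TopSpace} (x : X) s p : IsTauProd x s p -> p 0 = x.
Proof.
  intros Hp. apply (tau_prod_off x s p 0 Hp I01_0). intros n k Hk T.
  pose proof (Ileft_pos n k). lra.
Qed.
Lemma tau_prod_1 {X : TopSpace} (x : X) s p : IsTauProd x s p -> p 1 = x.
Proof.
  intros Hp. apply (tau_prod_off x s p 1 Hp I01_1). intros n k Hk T. pose proof (Iright_le n k Hk).
  pose proof (Rinv_0_lt_compat _ (pow3_pos (n+1))). lra.
Qed.

Lemma tau_prod_seq_ext {X : TopSpace} (x : X) s s' p : (forall i, s i = s' i) -> IsTauProd x s p ->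
  IsTauProd x s' p.
Proof. intros E. replace s' with s; auto. apply functional_extensionality; auto. Qed.

(** * Infinite products *)
Definition slot_lo (k : nat) : R := INR k / INR (k + 1).
Definition slot_hi (k : nat) : R := INR (k + 1) / INR (k + 2).

Lemma INR_S1 k : INR (k + 1) = INR k + 1. Proof. rewrite plus_INR; simpl; ring. Qed.
Lemma INR_S2 k : INR (k + 2) = INR k + 2. Proof. rewrite plus_INR; simpl; ring. Qed.

Lemma slot_lo_eq k : slot_lo k = 1 - / (INR k + 1).
Proof. unfold slot_lo. rewrite INR_S1. pose proof (pos_INR k). field. lra. Qed.
Lemma slot_hi_eq k : slot_hi k = 1 - / (INR k + 2).
Proof. unfold slot_hi. rewrite INR_S1, INR_S2. pose proof (pos_INR k). field. lra. Qed.
Lemma slot_hi_lo k : slot_hi k = slot_lo (S k).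
Proof. rewrite slot_hi_eq, slot_lo_eq, S_INR. f_equal. f_equal. ring. Qed.

Lemma slot_hi_len k : slot_hi k = slot_lo k + / (INR (k + 1) * INR (k + 2)).
Proof. rewrite slot_hi_eq, slot_lo_eq, INR_S1, INR_S2. pose proof (pos_INR k). field. lra. Qed.

Lemma slot_pos k : 0 < INR (k + 1) * INR (k + 2).
Proof. rewrite INR_S1, INR_S2. pose proof (pos_INR k). nra. Qed.

Lemma slot_lo_mono i j : (i <= j)%nat -> slot_lo i <= slot_lo j.
Proof.
  intros H. rewrite !slot_lo_eq. apply le_INR in H. pose proof (pos_INR i).
  assert (/ (INR j + 1) <= / (INR i + 1)) by (apply Rinv_le_contravar; lra). lra.
Qed.

Lemma slot_lo_0 : slot_lo 0 = 0. Proof. unfold slot_lo; simpl. field. Qed.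
Lemma slot_hi_lt1 k : slot_hi k < 1.
Proof.
  rewrite slot_hi_eq. pose proof (pos_INR k). pose proof (Rinv_0_lt_compat (INR k + 2)). lra.
Qed.
Lemma slot_lo_lt_hi slotk : slot_lo slotk < slot_hi slotk.
Proof. rewrite slot_hi_len. pose proof (Rinv_0_lt_compat _ (slot_pos slotk)). lra. Qed.

Lemma slot_disj k k' t : slot_lo k < t < slot_hi k -> slot_lo k' <= t <= slot_hi k' -> k = k'.
Proof.
  intros T1 T2. destruct (lt_eq_lt_dec k k') as [[L|L]|L]; auto; exfalso.
  - pose proof (slot_lo_mono (S k) k' L). rewrite <- slot_hi_lo in H. lra.
  - pose proof (slot_lo_mono (S k') k L). rewrite <- slot_hi_lo in H. lra.
Qed.

Lemma slot_exists t : 0 <= t < 1 -> exists k, slot_lo k <= t <= slot_hi k.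
Proof.
  intros Ht.
  assert (exists K, t <= slot_hi K).
  { destruct (archimed (/ (1 - t))) as [A _].
    assert (0 < / (1 - t)) by (apply Rinv_0_lt_compat; lra).
    assert (0 < IZR (up (/ (1 - t)))) by lra.
    apply lt_0_IZR in H0. exists (Z.to_nat (up (/ (1 - t)))).
    rewrite slot_hi_eq, INR_IZR_INZ, Z2Nat.id by lia.
    assert (/ (1 - t) < IZR (up (/ (1 - t))) + 2) by lra.
    assert (/ (IZR (up (/ (1 - t))) + 2) < / / (1 - t)) by (apply Rinv_lt_contravar; nra).
    rewrite Rinv_inv in H2. lra. }
  destruct H as [K HK]. induction K.
  - exists 0%nat. rewrite slot_lo_0. lra.
  - destruct (Rle_dec t (slot_hi K)); auto. exists (S K). rewrite <- slot_hi_lo. lra.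
Qed.

Definition slot_param (k : nat) (t : R) : R := (t - slot_lo k) * INR (k + 1) * INR (k + 2).

Lemma inf_prod_on {X : TopSpace} (x : X) s p k t : IsInfProd x s p ->
  slot_lo k <= t <= slot_hi k -> p t = s k (slot_param k t).
Proof. intros [H _] Ht. apply H; auto. Qed.

Lemma slot_param_ends {X : TopSpace} (x : X) s k : (forall i, is_loop x (s i)) ->
  s k (slot_param k (slot_lo k)) = x /\ s k (slot_param k (slot_hi k)) = x.
Proof.
  intros Ls. destruct (Ls k) as [_ [A0 A1]]. unfold slot_param. split.
  - rewrite Rminus_diag, !Rmult_0_l; auto.
  - rewrite slot_hi_len.
    replace ((slot_lo k + / (INR (k + 1) * INR (k + 2)) - slot_lo k) * INR (k + 1) * INR (k + 2))
      with 1; auto.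
    field. pose proof (slot_pos k) as SP. split; intro E; rewrite E in SP; lra.
Qed.

Lemma inf_prod_off {X : TopSpace} (x : X) s p t :
  (forall i, is_loop x (s i)) -> IsInfProd x s p -> I01 t ->
  (forall k, ~ (slot_lo k < t < slot_hi k)) -> p t = x.
Proof.
  intros Ls Hp Ht N. destruct (Req_dec t 1) as [->|Ne]; [apply Hp|].
  destruct (slot_exists t) as [k Hk]; [unfold I01 in *; lra|].
  rewrite (inf_prod_on x s p k t Hp Hk).
  assert (t = slot_lo k \/ t = slot_hi k).
  { destruct (Req_dec t (slot_lo k)); auto. destruct (Req_dec t (slot_hi k)); auto.
    exfalso; apply (N k); lra. }
  destruct (slot_param_ends x s k Ls). destruct H as [-> | ->]; auto.
Qed.

Lemma inf_prod_unique {X : TopSpace} (x : X) s p q : (forall i, is_loop x (s i)) ->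
  IsInfProd x s p -> IsInfProd x s q -> forall t, I01 t -> p t = q t.
Proof.
  intros Ls Hp Hq t Ht.
  destruct (classic (exists k, slot_lo k < t < slot_hi k)) as [[k T]|N].
  - rewrite (inf_prod_on x s p k t), (inf_prod_on x s q k t); auto; lra.
  - rewrite (inf_prod_off x s p t), (inf_prod_off x s q t); auto; intros k T; apply N; eauto.
Qed.

Definition inf_prod {X : TopSpace} (x : X) (s : nat -> R -> X) (t : R) : X :=
  match excluded_middle_informative (exists k : nat, slot_lo k < t < slot_hi k) with
  | left H => let k := proj1_sig (constructive_indefinite_description _ H) in s k (slot_param k t)
  | right _ => x
  end.

Lemma inf_prod_spec {X : TopSpace} (x : X) s : (forall i, is_loop x (s i)) ->
  IsInfProd x s (inf_prod x s).
Proof.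
  intros Ls. split.
  - intros k t Ht. change (inf_prod x s t = s k (slot_param k t)).
    unfold inf_prod. destruct excluded_middle_informative as [H|H].
    + destruct (constructive_indefinite_description _ H) as [k' T']. simpl.
      replace k' with k; auto. symmetry; apply (slot_disj k' k t); auto.
    + assert (t = slot_lo k \/ t = slot_hi k).
      { destruct (Req_dec t (slot_lo k)); auto. destruct (Req_dec t (slot_hi k)); auto.
        exfalso. apply H. exists k. unfold slot_lo, slot_hi in *. lra. }
      destruct (slot_param_ends x s k Ls). destruct H0 as [-> | ->]; auto.
  - unfold inf_prod. destruct excluded_middle_informative as [[k T]|H]; auto.
    exfalso. pose proof (slot_hi_lt1 k). lra.
Qed.

Lemma inf_prod_cont {X : TopSpace} (x : X) s p : null_seq x s -> IsInfProd x s p -> cont01 p.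
Proof.
  intros Ns Hp. pose proof (proj1 Ns) as Ls.
  apply (cont01_piecewise x s nat (fun _ => True) (fun k => k) slot_lo
    (fun k => INR (k + 1) * INR (k + 2)) p Ns).
  - intros; apply slot_pos.
  - intros N. exists (INR (N + 1) * INR (N + 2)). split; [apply slot_pos|].
    intros k _ Hk. rewrite !INR_S1, !INR_S2. apply lt_INR in Hk. pose proof (pos_INR k). nra.
  - intros k t _ Ht. rewrite <- slot_hi_len in Ht. rewrite (inf_prod_on x s p k t Hp); [|lra].
    unfold slot_param. f_equal. ring.
  - intros t Ht N. apply (inf_prod_off x s p t Ls Hp Ht). intros k T. apply (N k I).
    rewrite <- slot_hi_len; auto.
Qed.

Lemma inf_prod_loop {X : TopSpace} (x : X) s p : null_seq x s -> IsInfProd x s p -> is_loop x p.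
Proof.
  intros Ns Hp. split; [eapply inf_prod_cont; eauto|]. split; [|apply Hp].
  rewrite (inf_prod_on x s p 0 0 Hp).
  2:{ rewrite slot_lo_0. pose proof (slot_lo_lt_hi 0). rewrite slot_lo_0 in H. lra. }
  pose proof (proj1 (slot_param_ends x s 0 (proj1 Ns))) as E. rewrite slot_lo_0 in E. exact E.
Qed.


(** * Blocks and the block reparametrisations *)

(* [[0,1)] is cut into the blocks [[block_lo n, block_hi n]], each made of two halves of
   length [3^-(n+1)]; the second half is the rightmost middle-thirds interval of level [n]. *)
Definition block_lo (n : nat) : R := 1 - / 3 ^ n.
Definition block_mid (n : nat) : R := 1 - 2 / 3 ^ (n + 1).
Definition block_hi (n : nat) : R := 1 - / 3 ^ (n + 1).

Lemma pow3_add1 n : 3 ^ (n + 1) = 3 * 3 ^ n.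
Proof. rewrite pow_add. simpl. ring. Qed.

Lemma block_facts n :
  block_lo n < block_mid n < block_hi n /\
  block_mid n - block_lo n = / 3 ^ (n + 1) /\ block_hi n - block_mid n = / 3 ^ (n + 1) /\
  block_hi n = block_lo (S n) /\ 0 <= block_lo n /\ block_hi n < 1.
Proof.
  unfold block_lo, block_mid, block_hi. rewrite pow3_add1. pose proof (pow3_ge1 n).
  replace (S n) with (n + 1)%nat by lia. rewrite pow3_add1. unfold Rdiv. rewrite Rinv_mult.
  assert (0 < / 3 ^ n <= 1).
  { split; [apply Rinv_0_lt_compat; lra | rewrite <- Rinv_1; apply Rinv_le_contravar; lra]. }
  set (u := / 3 ^ n) in *. repeat split; lra.
Qed.

Lemma block_lo_0 : block_lo 0 = 0. Proof. unfold block_lo; simpl. field. Qed.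

Lemma block_lo_mono n m : (n <= m)%nat -> block_lo n <= block_lo m.
Proof.
  intros H. unfold block_lo. assert (3 ^ n <= 3 ^ m) by (apply Rle_pow; [lra | auto]).
  pose proof (pow3_pos n). assert (/ 3 ^ m <= / 3 ^ n) by (apply Rinv_le_contravar; lra). lra.
Qed.

Lemma pow3_INR N : INR N + 1 <= 3 ^ (N + 1).
Proof.
  induction N; [simpl; lra|]. rewrite S_INR. replace (S N + 1)%nat with (S (N + 1)) by lia.
  pose proof (pow3_ge1 (N + 1)). simpl. lra.
Qed.

Lemma block_exists t : 0 <= t < 1 -> exists n, block_lo n <= t < block_lo (S n).
Proof.
  intros Ht.
  assert (exists N, t < block_hi N) as [N HN].
  { destruct (archimed (/ (1 - t))) as [A _].
    assert (0 < / (1 - t)) by (apply Rinv_0_lt_compat; lra).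
    assert (0 < IZR (up (/ (1 - t)))) by lra. apply lt_0_IZR in H0.
    set (N := Z.to_nat (up (/ (1 - t)))).
    assert (INR N = IZR (up (/ (1 - t)))) by (unfold N; rewrite INR_IZR_INZ, Z2Nat.id by lia; auto).
    exists N. unfold block_hi. pose proof (pow3_INR N).
    assert (HH : / 3 ^ (N + 1) < / / (1 - t))
      by (apply Rinv_lt_contravar; [apply Rmult_lt_0_compat|]; lra).
    rewrite Rinv_inv in HH. lra. }
  induction N.
  - exists 0%nat. rewrite block_lo_0. destruct (block_facts 0) as [_ [_ [_ [E _]]]]. lra.
  - destruct (Rlt_dec t (block_hi N)) as [Lt | Ge]; auto. exists (S N).
    destruct (block_facts N) as [_ [_ [_ [E _]]]].
    destruct (block_facts (S N)) as [_ [_ [_ [E' _]]]]. lra.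
Qed.

Lemma block_unique n m t :
  block_lo n <= t < block_lo (S n) -> block_lo m <= t < block_lo (S m) -> n = m.
Proof.
  intros Hn Hm. destruct (lt_eq_lt_dec n m) as [[L | L] | L]; auto; exfalso.
  - pose proof (block_lo_mono (S n) m L). lra.
  - pose proof (block_lo_mono (S m) n L). lra.
Qed.

Definition block_of (t : R) : nat :=
  match excluded_middle_informative (exists n, block_lo n <= t < block_lo (S n)) with
  | left H => proj1_sig (constructive_indefinite_description _ H)
  | right _ => 0%nat
  end.

Lemma block_of_eq n t : block_lo n <= t < block_lo (S n) -> block_of t = n.
Proof.
  intros Hn. unfold block_of. destruct excluded_middle_informative as [H | H]; [| exfalso; eauto].
  destruct (constructive_indefinite_description _ H) as [m Hm]. simpl. eapply block_unique; eauto.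
Qed.

Lemma scaled_I01 n t l : l <= t <= l + / 3 ^ (n + 1) -> I01 ((t - l) * 3 ^ (n + 1)).
Proof.
  intros H. pose proof (pow3_pos (n + 1)). unfold I01. split; [nra|].
  assert ((t - l) * 3 ^ (n + 1) <= / 3 ^ (n + 1) * 3 ^ (n + 1)) by (apply Rmult_le_compat_r; lra).
  rewrite Rinv_l in H1; lra.
Qed.

Lemma shrunk_I01 n u : I01 u -> 0 <= u / 3 ^ (n + 1) <= / 3 ^ (n + 1).
Proof.
  intros Hu. pose proof (pow3_pos (n + 1)). unfold I01 in Hu. split; [apply Rdiv_le_0_compat; lra|].
  unfold Rdiv. rewrite <- (Rmult_1_l (/ 3 ^ (n + 1))) at 2.
  apply Rmult_le_compat_r; [left; apply Rinv_0_lt_compat|]; lra.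
Qed.

Definition block_data (A B C : nat -> R) : Prop :=
  (forall n, 0 <= A n <= B n /\ B n <= C n /\ C n <= 1) /\ (forall n, C n = A (S n)) /\
  A 0%nat = 0 /\ (forall y, 0 <= y < 1 -> exists n, y <= C n).

Definition block_map (A B C : nat -> R) (t : R) : R :=
  if Rlt_dec t 1 then
    let n := block_of t in
    if Rle_dec t (block_mid n) then A n + (B n - A n) * ((t - block_lo n) * 3 ^ (n + 1))
    else B n + (C n - B n) * ((t - block_mid n) * 3 ^ (n + 1))
  else 1.

Lemma block_map_first A B C n t : block_lo n <= t <= block_mid n ->
  block_map A B C t = A n + (B n - A n) * ((t - block_lo n) * 3 ^ (n + 1)).
Proof.
  intros Ht. destruct (block_facts n) as [[F1 F2] [_ [_ [F5 [_ F7]]]]].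
  unfold block_map. destruct Rlt_dec; [|lra]. rewrite (block_of_eq n t) by lra.
  destruct Rle_dec; [auto | lra].
Qed.

Lemma block_map_second A B C n t : block_data A B C -> block_mid n <= t <= block_hi n ->
  block_map A B C t = B n + (C n - B n) * ((t - block_mid n) * 3 ^ (n + 1)).
Proof.
  intros [_ [CA _]] Ht. destruct (block_facts n) as [[F1 F2] [F3 [F4 [F5 [_ F7]]]]].
  assert (Inv : / 3 ^ (n + 1) * 3 ^ (n + 1) = 1) by (apply Rinv_l, pow_nonzero; lra).
  unfold block_map. destruct Rlt_dec; [|lra].
  destruct (Req_dec t (block_hi n)) as [-> | Ne].
  - destruct (block_facts (S n)) as [[G1 G2] [_ [_ [G5 _]]]].
    rewrite (block_of_eq (S n)) by lra. destruct Rle_dec; [|lra].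
    rewrite <- F5, Rminus_diag, F4, Rmult_0_l, Rmult_0_r, Inv, <- CA. ring.
  - rewrite (block_of_eq n t) by lra. destruct Rle_dec; [|auto].
    assert (t = block_mid n) by lra. subst t. rewrite F3, Inv, Rminus_diag. ring.
Qed.

Lemma block_map_0 A B C : block_data A B C -> block_map A B C 0 = 0.
Proof.
  intros [_ [_ [A0 _]]]. destruct (block_facts 0) as [[F1 F2] _]. rewrite block_lo_0 in *.
  rewrite (block_map_first A B C 0) by (rewrite block_lo_0; lra). rewrite A0, block_lo_0. ring.
Qed.

Lemma block_map_1 A B C : block_map A B C 1 = 1.
Proof. unfold block_map. destruct Rlt_dec; [lra | auto]. Qed.

Lemma block_map_in_block A B C t : block_data A B C -> I01 t -> t <> 1 ->
  exists n, block_lo n <= t <= block_hi n /\ A n <= block_map A B C t <= C n.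
Proof.
  intros Ok Ht Ne. destruct (block_exists t) as [n Hn]; [unfold I01 in *; lra|].
  destruct (block_facts n) as [[F1 F2] [F3 [F4 [F5 _]]]]. destruct (proj1 Ok n) as [O1 [O2 O3]].
  exists n. split; [lra|].
  destruct (Rle_dec t (block_mid n)).
  - rewrite (block_map_first A B C n t) by lra.
    pose proof (scaled_I01 n t (block_lo n)). unfold I01 in H. split; nra.
  - rewrite (block_map_second A B C n t Ok) by lra.
    pose proof (scaled_I01 n t (block_mid n)). unfold I01 in H. split; nra.
Qed.

Lemma block_map_into01 A B C : block_data A B C -> into01 (block_map A B C).
Proof.
  intros Ok t Ht. destruct (Req_dec t 1) as [-> | Ne]; [rewrite block_map_1; auto|].
  destruct (block_map_in_block A B C t Ok Ht Ne) as [n [_ Hv]].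
  destruct (proj1 Ok n). unfold I01; lra.
Qed.

Lemma block_map_mono A B C : block_data A B C ->
  forall t1 t2, I01 t1 -> I01 t2 -> t1 <= t2 -> block_map A B C t1 <= block_map A B C t2.
Proof.
  intros Ok t1 t2 H1 H2 Hle. pose proof Ok as [Ok1 [CA _]].
  pose proof (block_map_into01 A B C Ok t1 H1) as V.
  destruct (Req_dec t2 1) as [-> | N2]; [rewrite block_map_1; unfold I01 in V; lra|].
  assert (N1 : t1 <> 1) by (unfold I01 in *; lra).
  destruct (block_map_in_block A B C t1 Ok H1 N1) as [n1 [B1 V1]].
  destruct (block_map_in_block A B C t2 Ok H2 N2) as [n2 [B2 V2]].
  assert (Amono : forall n m, (n <= m)%nat -> A n <= A m).
  { intros n m H. induction H; [lra|]. specialize (Ok1 m). rewrite <- CA. lra. }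
  pose proof (pow3_pos (n1 + 1)).
  destruct (lt_eq_lt_dec n1 n2) as [[L | <-] | L].
  - assert (C n1 <= A n2) by (rewrite CA; apply Amono; lia). lra.
  - destruct (block_facts n1) as [[F1 F2] [F3 [F4 _]]]. specialize (Ok1 n1).
    destruct (Rle_dec t1 (block_mid n1)); destruct (Rle_dec t2 (block_mid n1)); try lra.
    + rewrite !(block_map_first A B C n1) by lra.
      assert ((t1 - block_lo n1) * 3 ^ (n1 + 1) <= (t2 - block_lo n1) * 3 ^ (n1 + 1))
        by (apply Rmult_le_compat_r; lra). nra.
    + rewrite (block_map_first A B C n1 t1), (block_map_second A B C n1 t2) by (auto; lra).
      pose proof (scaled_I01 n1 t1 (block_lo n1)). pose proof (scaled_I01 n1 t2 (block_mid n1)).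
      unfold I01 in *. nra.
    + rewrite !(block_map_second A B C n1) by (auto; lra).
      assert ((t1 - block_mid n1) * 3 ^ (n1 + 1) <= (t2 - block_mid n1) * 3 ^ (n1 + 1))
        by (apply Rmult_le_compat_r; lra). nra.
  - pose proof (block_lo_mono (S n2) n1 L).
    destruct (block_facts n2) as [_ [_ [_ [F5 _]]]].
    assert (t1 = t2) by lra. subst; lra.
Qed.

Lemma affine_preimage a b y : a <= y <= b -> exists u, I01 u /\ a + (b - a) * u = y.
Proof.
  intros Hy. destruct (Req_dec a b) as [E | E].
  - exists 0. split; [auto | subst; lra].
  - exists ((y - a) / (b - a)). split; [|field; lra].
    split; [apply Rdiv_le_0_compat; lra|].
    apply Rmult_le_reg_r with (b - a); [lra|]. field_simplify; lra.
Qed.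

Lemma block_map_onto A B C : block_data A B C ->
  forall y, I01 y -> exists t, I01 t /\ block_map A B C t = y.
Proof.
  intros Ok y Hy. pose proof Ok as [Ok1 [CA [A0 Cov]]].
  destruct (Req_dec y 1) as [-> | Ne]; [exists 1; split; [auto | apply block_map_1]|].
  destruct (Cov y) as [K HK]; [unfold I01 in *; lra|].
  assert (exists n, A n <= y <= C n) as [n Hn].
  { induction K; [exists 0%nat; rewrite A0; unfold I01 in Hy; lra|].
    destruct (Rle_dec y (C K)); auto. exists (S K). rewrite <- CA. split; [lra | auto]. }
  destruct (block_facts n) as [[F1 F2] [F3 [F4 [_ [F6 F7]]]]]. specialize (Ok1 n).
  pose proof (pow3_pos (n + 1)).
  destruct (Rle_dec y (B n)).
  - destruct (affine_preimage (A n) (B n) y) as [u [Hu Eu]]; [lra|].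
    exists (block_lo n + u / 3 ^ (n + 1)). pose proof (shrunk_I01 n u Hu).
    split; [unfold I01; lra|].
    rewrite (block_map_first A B C n) by lra. rewrite <- Eu. f_equal. f_equal. field. lra.
  - destruct (affine_preimage (B n) (C n) y) as [u [Hu Eu]]; [lra|].
    exists (block_mid n + u / 3 ^ (n + 1)). pose proof (shrunk_I01 n u Hu).
    split; [unfold I01; lra|].
    rewrite (block_map_second A B C n) by (auto; lra). rewrite <- Eu. f_equal. f_equal. field. lra.
Qed.

Lemma block_map_reparam A B C : block_data A B C ->
  cont1 (block_map A B C) /\ into01 (block_map A B C) /\
  block_map A B C 0 = 0 /\ block_map A B C 1 = 1.
Proof.
  intros Ok. split; [|split; [|split]].
  - apply cont1_monotone_onto; auto using block_map_into01, block_map_mono, block_map_onto.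
  - apply block_map_into01; auto.
  - apply block_map_0; auto.
  - apply block_map_1.
Qed.
(* Under [chain_map] the first half of block [n] is collapsed and the second half is
   stretched over the [n]-th slot; under [split_map] the two halves go to the slots
   [2n] and [2n+1]. *)
Definition chain_map : R -> R := block_map slot_lo slot_lo (fun n => slot_hi n).
Definition split_map : R -> R :=
  block_map (fun n => slot_lo (2 * n)) (fun n => slot_lo (2 * n + 1))
  (fun n => slot_lo (2 * n + 2)).

Lemma slot_lo_I01 k : 0 <= slot_lo k < 1.
Proof.
  rewrite slot_lo_eq. pose proof (pos_INR k). split.
  assert (/ (INR k + 1) <= 1) by (rewrite <- Rinv_1; apply Rinv_le_contravar; lra). lra.
  assert (0 < / (INR k + 1)) by (apply Rinv_0_lt_compat; lra). lra.
Qed.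

Lemma chain_map_data : block_data slot_lo slot_lo (fun n => slot_hi n).
Proof.
  repeat split; intros.
  - apply slot_lo_I01.
  - right; auto.
  - rewrite slot_hi_lo. apply slot_lo_mono. lia.
  - rewrite slot_hi_lo. pose proof (slot_lo_I01 (S n)). lra.
  - apply slot_hi_lo.
  - apply slot_lo_0.
  - destruct (slot_exists y H) as [k Hk]. exists k. lra.
Qed.

Lemma split_map_data : block_data (fun n => slot_lo (2 * n)) (fun n => slot_lo (2 * n + 1))
  (fun n => slot_lo (2 * n + 2)).
Proof.
  repeat split; intros.
  - apply slot_lo_I01.
  - apply slot_lo_mono; lia.
  - apply slot_lo_mono; lia.
  - pose proof (slot_lo_I01 (2 * n + 2)). lra.
  - f_equal; lia.
  - replace (2 * 0)%nat with 0%nat by lia. apply slot_lo_0.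
  - destruct (slot_exists y H) as [k Hk]. exists k. rewrite slot_hi_lo in Hk.
    pose proof (slot_lo_mono (S k) (2 * k + 2) ltac:(lia)). lra.
Qed.

Lemma tau_level_ge n k N : (k < 2 ^ n)%nat -> (2 ^ N <= tau_index n k)%nat -> (N <= n)%nat.
Proof.
  intros Hk H. unfold tau_index in H. destruct (le_lt_dec N n); auto. exfalso.
  assert (2 ^ S n <= 2 ^ N)%nat by (apply Nat.pow_le_mono_r; lia). simpl in H0. lia.
Qed.

Lemma pow2_pred_lt n : (2 ^ n - 1 < 2 ^ n)%nat.
Proof. pose proof (pow2_pos n); lia. Qed.

(* [right_chain x a] has [a n] on the rightmost interval of level [n] and [left_chain x b]
   has [rev (b n)] on the leftmost one; all other loops are constant. *)
Definition right_chain {X : TopSpace} (x : X) (a : nat -> R -> X) (i : nat) : R -> X :=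
  if Nat.eqb i (tau_index (tau_level i) (2 ^ tau_level i - 1)) then a (tau_level i)
  else const_path x.
Definition left_chain {X : TopSpace} (x : X) (b : nat -> R -> X) (i : nat) : R -> X :=
  if Nat.eqb i (tau_index (tau_level i) 0) then rev (b (tau_level i)) else const_path x.

Lemma right_chain_on {X : TopSpace} (x : X) a n : right_chain x a (tau_index n (2 ^ n - 1)) = a n.
Proof.
  unfold right_chain. rewrite tau_level_index by apply pow2_pred_lt. rewrite Nat.eqb_refl.
  auto.
Qed.
Lemma right_chain_off {X : TopSpace} (x : X) a n k : (k < 2 ^ n)%nat -> k <> (2 ^ n - 1)%nat ->
  right_chain x a (tau_index n k) = const_path x.
Proof.
  intros Hk Hne. unfold right_chain. rewrite tau_level_index by auto.
  destruct (Nat.eqb_spec (tau_index n k) (tau_index n (2 ^ n - 1))); auto.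
  exfalso. unfold tau_index in e. lia.
Qed.
Lemma left_chain_on {X : TopSpace} (x : X) b n : left_chain x b (tau_index n 0) = rev (b n).
Proof.
  unfold left_chain. rewrite tau_level_index by (pose proof (pow2_pos n); lia).
  rewrite Nat.eqb_refl. auto.
Qed.
Lemma left_chain_off {X : TopSpace} (x : X) b n k : (k < 2 ^ n)%nat -> k <> 0%nat ->
  left_chain x b (tau_index n k) = const_path x.
Proof.
  intros Hk Hne. unfold left_chain. rewrite tau_level_index by auto.
  destruct (Nat.eqb_spec (tau_index n k) (tau_index n 0)); auto.
  exfalso. unfold tau_index in e. pose proof (pow2_pos n). lia.
Qed.

Lemma null_right_chain {X : TopSpace} (x : X) a : null_seq x a -> null_seq x (right_chain x a).
Proof.
  intros [La Na]. split.
  - intros i. unfold right_chain. destruct Nat.eqb; auto using const_loop.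
  - intros U HU Ux. destruct (Na U HU Ux) as [N HN]. exists (2 ^ N)%nat. intros i Hi t Ht.
    destruct (tau_index_surj i) as [n [k [Hk ->]]].
    destruct (Nat.eq_dec k (2 ^ n - 1)) as [->|Ne].
    + rewrite right_chain_on. apply HN; auto. eapply tau_level_ge; [apply pow2_pred_lt|eauto].
    + rewrite right_chain_off; auto.
Qed.

Lemma tau_prod_affine {X : TopSpace} (x : X) s p n k u :
  IsTauProd x s p -> (k < 2 ^ n)%nat -> I01 u ->
  p (Ileft n k + u / 3 ^ (n + 1)) = s (tau_index n k) u.
Proof.
  intros Hp Hk Hu. pose proof (pow3_pos (n+1)). rewrite (tau_prod_on x s p n k); auto.
  - f_equal. field. lra.
  - rewrite Iright_Ileft. unfold I01 in Hu. split.
    assert (0 <= u / 3 ^ (n+1)) by (apply Rdiv_le_0_compat; lra). lra.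
    unfold Rdiv. assert (u * / 3 ^ (n + 1) <= 1 * / 3 ^ (n + 1)).
    { apply Rmult_le_compat_r; [left; apply Rinv_0_lt_compat|]; lra. } lra.
Qed.

Lemma tau_prod_ends {X : TopSpace} (x : X) s p n k : (forall i, is_loop x (s i)) ->
  IsTauProd x s p ->
  (k < 2 ^ n)%nat -> p (Ileft n k) = x /\ p (Iright n k) = x.
Proof.
  intros Ls Hp Hk. destruct (Ls (tau_index n k)) as [_ [A0 A1]]. split.
  - replace (Ileft n k) with (Ileft n k + 0 / 3 ^ (n+1)) by (unfold Rdiv; ring).
    rewrite (tau_prod_affine x s p n k 0); auto.
  - rewrite Iright_Ileft.
    replace (Ileft n k + / 3 ^ (n+1)) with (Ileft n k + 1 / 3 ^ (n+1)) by (unfold Rdiv; ring).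
    rewrite (tau_prod_affine x s p n k 1); auto.
Qed.

Lemma inf_prod_affine {X : TopSpace} (x : X) s q k u : IsInfProd x s q -> I01 u ->
  q (slot_lo k + (slot_hi k - slot_lo k) * u) = s k u.
Proof.
  intros Hq Hu. pose proof (slot_lo_lt_hi k).
  rewrite (inf_prod_on x s q k _ Hq); [|unfold I01 in Hu; split; nra].
  f_equal. unfold slot_param. rewrite slot_hi_len. pose proof (slot_pos k).
  field. split; intro E; rewrite E in H0; lra.
Qed.

Lemma first_half_not_rightmost n m t : block_lo n <= t <= block_mid n ->
  Ileft m (2 ^ m - 1) < t < Iright m (2 ^ m - 1) -> False.
Proof.
  intros T1 T2. destruct (rightmost_interval m) as [A B]. rewrite A, B in T2.
  unfold block_lo, block_mid in T1.
  destruct (le_lt_dec n m).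
  - assert (3 ^ (n+1) <= 3 ^ (m+1)) by (apply Rle_pow; [lra|lia]).
    pose proof (pow3_pos (n+1)).
    assert (2 / 3 ^ (m+1) <= 2 / 3 ^ (n+1)).
    { unfold Rdiv. apply Rmult_le_compat_l; [lra|]. apply Rinv_le_contravar; lra. } lra.
  - assert (3 ^ (m+1) <= 3 ^ n) by (apply Rle_pow; [lra|lia]).
    pose proof (pow3_pos (m+1)).
    assert (/ 3 ^ n <= / 3 ^ (m+1)) by (apply Rinv_le_contravar; lra). lra.
Qed.

Lemma mirror_first_half_not_leftmost n m t : 2 / 3 ^ (n + 1) <= t <= / 3 ^ n ->
  Ileft m 0 < t < Iright m 0 -> False.
Proof.
  intros T1 T2. destruct (leftmost_interval m) as [A B]. rewrite A, B in T2.
  destruct (le_lt_dec n m).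
  - assert (3 ^ (n+1) <= 3 ^ (m+1)) by (apply Rle_pow; [lra|lia]).
    pose proof (pow3_pos (n+1)).
    assert (2 / 3 ^ (m+1) <= 2 / 3 ^ (n+1)).
    { unfold Rdiv. apply Rmult_le_compat_l; [lra|]. apply Rinv_le_contravar; lra. } lra.
  - assert (3 ^ (m+1) <= 3 ^ n) by (apply Rle_pow; [lra|lia]).
    pose proof (pow3_pos (m+1)).
    assert (/ 3 ^ n <= / 3 ^ (m+1)) by (apply Rinv_le_contravar; lra). lra.
Qed.

Lemma tau_prod_off_const {X : TopSpace} (x : X) s p t : IsTauProd x s p -> I01 t ->
  (forall m k, (k < 2 ^ m)%nat -> Ileft m k < t < Iright m k ->
    s (tau_index m k) = const_path x) -> p t = x.
Proof.
  intros Hp Ht H.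
  destruct (classic (exists m k, (k < 2 ^ m)%nat /\ Ileft m k < t < Iright m k)) as
    [[m [k [Hk T]]]|N].
  - rewrite (tau_prod_on x s p m k t Hp Hk) by lra. rewrite H; auto.
  - apply (tau_prod_off x s p t Hp Ht). intros m k Hk T; apply N; eauto.
Qed.

Lemma right_chain_tau_prod {X : TopSpace} (x : X) a p q : null_seq x a ->
  IsTauProd x (right_chain x a) p -> IsInfProd x a q -> forall t, I01 t -> p t = q (chain_map t).
Proof.
  intros Na Hp Hq t Ht. pose proof (proj1 Na) as La.
  destruct (Req_dec t 1) as [->|Ne].
  { unfold chain_map. rewrite block_map_1. rewrite (tau_prod_1 x _ p Hp). destruct Hq as [_ ->];
      auto. }
  destruct (block_exists t) as [n Hn]; [unfold I01 in *; lra|].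
  destruct (block_facts n) as [[F1 F2] [F3 [F4 [F5 _]]]].
  destruct (Rle_dec t (block_mid n)).
  - unfold chain_map. rewrite (block_map_first _ _ _ n t) by lra.
    rewrite Rminus_diag, Rmult_0_l, Rplus_0_r.
    replace (slot_lo n) with (slot_lo n + (slot_hi n - slot_lo n) * 0) by ring.
    rewrite (inf_prod_affine x a q n 0 Hq I01_0). destruct (La n) as [_ [-> _]].
    apply (tau_prod_off_const x _ p t Hp Ht). intros m k Hk T.
    destruct (Nat.eq_dec k (2 ^ m - 1)) as [->|Nk].
    + exfalso. apply (first_half_not_rightmost n m t); auto. lra.
    + apply right_chain_off; auto.
  - unfold chain_map. rewrite (block_map_second _ _ _ n t chain_map_data) by lra.
    set (u := (t - block_mid n) * 3 ^ (n + 1)).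
    assert (Hu : I01 u) by (apply scaled_I01; lra).
    rewrite (inf_prod_affine x a q n u Hq Hu).
    replace t with (Ileft n (2 ^ n - 1) + u / 3 ^ (n + 1)).
    + rewrite (tau_prod_affine x _ p n _ u Hp (pow2_pred_lt n) Hu). rewrite right_chain_on; auto.
    + destruct (rightmost_interval n) as [A _]. rewrite A. unfold u, block_mid. field.
      pose proof (pow3_pos (n+1)); lra.
Qed.

Lemma left_chain_tau_prod {X : TopSpace} (x : X) b p q : null_seq x b ->
  IsTauProd x (left_chain x b) p -> IsInfProd x b q -> forall t, I01 t ->
    p t = q (chain_map (1 - t)).
Proof.
  intros Nb Hp Hq t Ht. pose proof (proj1 Nb) as Lb.
  destruct (Req_dec t 0) as [->|Ne].
  { unfold chain_map. rewrite Rminus_0_r,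
      block_map_1. rewrite (tau_prod_0 x _ p Hp). destruct Hq as [_ ->]; auto. }
  destruct (block_exists (1 - t)) as [n Hn]; [unfold I01 in *; lra|].
  destruct (block_facts n) as [[F1 F2] [F3 [F4 [F5 _]]]].
  destruct (Rle_dec (1 - t) (block_mid n)).
  - unfold chain_map. rewrite (block_map_first _ _ _ n (1 - t)) by lra.
    rewrite Rminus_diag, Rmult_0_l, Rplus_0_r.
    replace (slot_lo n) with (slot_lo n + (slot_hi n - slot_lo n) * 0) by ring.
    rewrite (inf_prod_affine x b q n 0 Hq I01_0). destruct (Lb n) as [_ [-> _]].
    apply (tau_prod_off_const x _ p t Hp Ht). intros m k Hk T.
    destruct (Nat.eq_dec k 0) as [->|Nk].
    + exfalso. apply (mirror_first_half_not_leftmost n m t); auto. unfold block_lo, block_mid in *.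
      lra.
    + apply left_chain_off; auto.
  - unfold chain_map. rewrite (block_map_second _ _ _ n (1 - t) chain_map_data) by lra.
    set (u := (1 - t - block_mid n) * 3 ^ (n + 1)).
    assert (Hu : I01 u) by (apply scaled_I01; lra).
    rewrite (inf_prod_affine x b q n u Hq Hu).
    assert (Hu' : I01 (1 - u)) by (destruct Hu; split; lra).
    replace t with (Ileft n 0 + (1 - u) / 3 ^ (n + 1)).
    + rewrite (tau_prod_affine x _ p n 0 (1 - u) Hp ltac:(pose proof (pow2_pos n); lia) Hu').
      rewrite left_chain_on. unfold rev. f_equal. ring.
    + destruct (leftmost_interval n) as [A _]. rewrite A. unfold u, block_mid. field.
      pose proof (pow3_pos (n+1)); lra.
Qed.

(* The pieces of [p] on the first halves of the blocks, interleaved with the loops of the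
   second halves, which are the rightmost intervals. *)
Definition split_seq {X : TopSpace} (x : X) (a : nat -> R -> X) (p : R -> X) (j : nat) : R -> X :=
  if Nat.even j then (fun u => p (block_lo (Nat.div2 j) + u / 3 ^ (Nat.div2 j + 1)))
  else a (tau_index (Nat.div2 j) (2 ^ Nat.div2 j - 1)).

Lemma split_seq_even {X : TopSpace} (x : X) a p n : split_seq x a p (2 * n) =
  (fun u => p (block_lo n + u / 3 ^ (n + 1))).
Proof. unfold split_seq. rewrite Nat.even_even, Nat.div2_double. auto. Qed.
Lemma split_seq_odd {X : TopSpace} (x : X) a p n : split_seq x a p (2 * n + 1) = a
  (tau_index n (2 ^ n - 1)).
Proof. unfold split_seq. rewrite Nat.even_odd, Nat.div2_odd'. auto. Qed.

Lemma split_seq_inf_prod {X : TopSpace} (x : X) a p q : null_seq x a ->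
  IsTauProd x a p -> IsInfProd x (split_seq x a p) q -> forall t, I01 t -> p t = q (split_map t).
Proof.
  intros Na Hp Hq t Ht. pose proof (proj1 Na) as La.
  destruct (Req_dec t 1) as [->|Ne].
  { unfold split_map. rewrite block_map_1. rewrite (tau_prod_1 x _ p Hp). destruct Hq as [_ ->];
      auto. }
  destruct (block_exists t) as [n Hn]; [unfold I01 in *; lra|].
  destruct (block_facts n) as [[F1 F2] [F3 [F4 [F5 _]]]].
  destruct (Rle_dec t (block_mid n)).
  - unfold split_map. rewrite (block_map_first _ _ _ n t) by lra.
    set (u := (t - block_lo n) * 3 ^ (n + 1)).
    assert (Hu : I01 u) by (apply scaled_I01; lra).
    replace (slot_lo (2 * n + 1)) with (slot_hi (2 * n)) by (rewrite slot_hi_lo; f_equal; lia).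
    rewrite (inf_prod_affine x _ q (2 * n) u Hq Hu). rewrite split_seq_even. f_equal.
    unfold u. field. pose proof (pow3_pos (n+1)); lra.
  - unfold split_map. rewrite (block_map_second _ _ _ n t split_map_data) by lra.
    set (u := (t - block_mid n) * 3 ^ (n + 1)).
    assert (Hu : I01 u) by (apply scaled_I01; lra).
    replace (slot_lo (2 * n + 2)) with (slot_hi (2 * n + 1)) by (rewrite slot_hi_lo; f_equal; lia).
    rewrite (inf_prod_affine x _ q (2 * n + 1) u Hq Hu). rewrite split_seq_odd.
    replace t with (Ileft n (2 ^ n - 1) + u / 3 ^ (n + 1)).
    + rewrite (tau_prod_affine x _ p n _ u Hp (pow2_pred_lt n) Hu). auto.
    + destruct (rightmost_interval n) as [A _]. rewrite A. unfold u, block_mid. field.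
      pose proof (pow3_pos (n+1)); lra.
Qed.

Lemma interval_level_ge n k t m : (k < 2 ^ n)%nat -> Ileft n k < t < Iright n k ->
  block_lo m <= t -> (m <= n)%nat.
Proof.
  intros Hk T Hm. pose proof (Iright_le n k Hk). unfold block_lo in Hm.
  destruct (le_lt_dec m n); auto. exfalso.
  assert (3 ^ (n+1) <= 3 ^ m) by (apply Rle_pow; [lra|lia]).
  pose proof (pow3_pos (n+1)).
  assert (/ 3 ^ m <= / 3 ^ (n+1)) by (apply Rinv_le_contravar; lra). lra.
Qed.

Lemma tau_prod_block_loop {X : TopSpace} (x : X) a p n : null_seq x a -> IsTauProd x a p ->
  is_loop x (fun u => p (block_lo n + u / 3 ^ (n + 1))).
Proof.
  intros Na Hp. pose proof (pow3_pos (n + 1)).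
  destruct (block_facts n) as [[F1 F2] [F3 [F4 [F5 [F6 F7]]]]]. repeat split.
  - apply (cont01_comp p (fun u => block_lo n + u / 3 ^ (n + 1))).
    + apply (tau_prod_cont x a p Na Hp).
    + replace (fun u => block_lo n + u / 3 ^ (n + 1)) with (fun u => / 3 ^ (n + 1) * u + block_lo n)
        by (apply functional_extensionality; intros; field; lra). apply cont1_lin.
    + intros u Hu. pose proof (shrunk_I01 n u Hu). unfold I01; lra.
  - replace (block_lo n + 0 / 3 ^ (n + 1)) with (block_lo n) by (unfold Rdiv; ring).
    destruct n as [|m]; [rewrite block_lo_0; apply (tau_prod_0 x a p Hp)|].
    destruct (block_facts m) as [_ [_ [_ [E _]]]]. rewrite <- E.
    destruct (rightmost_interval m) as [_ B]. unfold block_hi. rewrite <- B.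
    apply (tau_prod_ends x a p m _ (proj1 Na) Hp (pow2_pred_lt m)).
  - replace (block_lo n + 1 / 3 ^ (n + 1)) with (block_mid n) by (unfold Rdiv; lra).
    destruct (rightmost_interval n) as [A _]. unfold block_mid. rewrite <- A.
    apply (tau_prod_ends x a p n _ (proj1 Na) Hp (pow2_pred_lt n)).
Qed.

(* On [[block_lo n, 1]] a transfinite product only involves loops of level [>= n]. *)
Lemma tau_prod_tail_block {X : TopSpace} (x : X) a p (U : X -> Prop) N :
  IsTauProd x a p -> (forall i, (N <= i)%nat -> forall u, I01 u -> U (a i u)) -> U x ->
  forall n, (N <= n)%nat -> forall t, block_lo n <= t <= 1 -> U (p t).
Proof.
  intros Hp HN Ux n Hn t Ht.
  destruct (classic (exists m k, (k < 2 ^ m)%nat /\ Ileft m k < t < Iright m k))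
    as [[m [k [Hk T]]] | NT].
  - rewrite (tau_prod_on x a p m k t Hp Hk) by lra. apply HN.
    + pose proof (interval_level_ge m k t n Hk T (proj1 Ht)). pose proof (tau_index_ge m k). lia.
    + apply scaled_I01. rewrite <- Iright_Ileft. lra.
  - destruct (block_facts n) as [_ [_ [_ [_ [F6 _]]]]].
    rewrite (tau_prod_off x a p t Hp); [auto | unfold I01; lra |].
    intros m k Hk T; apply NT; eauto.
Qed.

Lemma null_split_seq {X : TopSpace} (x : X) a p : null_seq x a -> IsTauProd x a p ->
  null_seq x (split_seq x a p).
Proof.
  intros Na Hp. split.
  - intros j. destruct (Nat.Even_or_Odd j) as [[n ->] | [n ->]].
    + rewrite split_seq_even. apply (tau_prod_block_loop x a); auto.
    + rewrite split_seq_odd. apply Na.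
  - intros U HU Ux. destruct (proj2 Na U HU Ux) as [N HN]. exists (2 * N)%nat. intros j Hj u Hu.
    destruct (Nat.Even_or_Odd j) as [[n ->] | [n ->]].
    + rewrite split_seq_even. pose proof (shrunk_I01 n u Hu).
      destruct (block_facts n) as [[F1 F2] [F3 [F4 [F5 [F6 F7]]]]].
      apply (tau_prod_tail_block x a p U N Hp HN Ux n); [lia | lra].
    + rewrite split_seq_odd. apply HN; auto. pose proof (tau_index_ge n (2 ^ n - 1)). lia.
Qed.

(** * Bijections of the natural numbers *)

Lemma least_above (P : nat -> Prop) k : (exists m, (k <= m)%nat /\ P m) ->
  exists m, (k <= m)%nat /\ P m /\ forall m', (k <= m')%nat -> P m' -> (m <= m')%nat.
Proof.
  intros Ex.
  destruct (dec_inh_nat_subset_has_unique_least_element (fun m => (k <= m)%nat /\ P m)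
              (fun m => classic _) Ex) as [m [[[Hk Pm] Hmin] _]].
  exists m. repeat split; auto.
Qed.

Lemma enum_exists (P : nat -> Prop) : (forall n, exists m, (n <= m)%nat /\ P m) ->
  exists e : nat -> nat, (forall n, P (e n)) /\ (forall n m, (n < m)%nat -> (e n < e m)%nat) /\
    (forall m, P m -> exists n, e n = m).
Proof.
  intros Inf.
  assert (Hnx : forall
    k, { m | (k <= m)%nat /\ P m /\ forall m', (k <= m')%nat -> P m' -> (m <= m')%nat }).
  { intros k. apply constructive_indefinite_description, least_above, Inf. }
  set (nx k := proj1_sig (Hnx k)).
  assert (Nx : forall k, (k <= nx k)%nat /\ P (nx k) /\ forall m', (k <= m')%nat -> P m' ->
    (nx k <= m')%nat).
  { intros k. unfold nx. destruct (Hnx k); auto. }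
  set (e := fix e n := match n with O => nx O | S n => nx (S (e n)) end).
  assert (Es : forall n, (e n < e (S n))%nat) by (intros n; simpl; destruct (Nx (S (e n))); lia).
  assert (Mono : forall n m, (n < m)%nat -> (e n < e m)%nat).
  { intros n m H. induction H; [apply Es | pose proof (Es m); lia]. }
  exists e. split; [|split]; auto.
  - intros n; destruct n; simpl; apply Nx.
  - intros m Pm.
    assert (G : forall n, (exists n', e n' = m) \/ (e n <= m)%nat).
    { induction n.
      - right. simpl. apply Nx; auto; lia.
      - destruct IHn as [? | IH]; auto. destruct (Nat.eq_dec (e n) m) as [<- | Ne]; eauto.
        right. simpl. apply Nx; auto. lia. }
    assert (forall n, (n <= e n)%nat) by (induction n; [lia | pose proof (Es n); lia]).
    destruct (G (S m)) as [? | C]; auto. pose proof (H (S m)). lia.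
Qed.

Lemma injective_left_inverse (f : nat -> nat) : (forall k k', f k = f k' -> k = k') ->
  exists g : nat -> nat, forall k, g (f k) = k.
Proof.
  intros Inj.
  exists (fun i => match excluded_middle_informative (exists k, f k = i) with
           | left H => proj1_sig (constructive_indefinite_description _ H) | right _ => O end).
  intros k. destruct excluded_middle_informative as [H | H]; [| exfalso; eauto].
  destruct (constructive_indefinite_description _ H) as [m Hm]. simpl. auto.
Qed.

Lemma bijection_extending (A B : nat -> Prop) (sA sB : nat -> nat) :
  (forall k k', sA k = sA k' -> k = k') -> (forall k k', sB k = sB k' -> k = k') ->
  (forall i, A i <-> exists k, sA k = i) -> (forall i, B i <-> exists k, sB k = i) ->
  (forall n, exists m, (n <= m)%nat /\ ~ A m) -> (forall n, exists m, (n <= m)%nat /\ ~ B m) ->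
  exists phi, bijective_nat phi /\ (forall k, phi (sA k) = sB k) /\
    (forall i, ~ A i -> ~ B (phi i)).
Proof.
  intros IA IB HA HB CA CB.
  destruct (enum_exists (fun m => ~ A m) CA) as [eA [EA1 [EA2 EA3]]].
  destruct (enum_exists (fun m => ~ B m) CB) as [eB [EB1 [EB2 EB3]]].
  assert (Inj : forall e : nat -> nat, (forall n m, (n < m)%nat -> (e n < e m)%nat) ->
                forall n m, e n = e m -> n = m).
  { intros e Em n m E. destruct (lt_eq_lt_dec n m) as [[L | L] | L]; auto; apply Em in L; lia. }
  destruct (injective_left_inverse eA (Inj eA EA2)) as [invA InvA].
  destruct (injective_left_inverse sA IA) as [pA PA].
  set (phi i := if excluded_middle_informative (A i) then sB (pA i) else eB (invA i)).
  assert (Phi1 : forall k, phi (sA k) = sB k).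
  { intros k. unfold phi. destruct excluded_middle_informative as [H | H].
    - rewrite PA; auto.
    - exfalso; apply H, HA; eauto. }
  assert (Phi2 : forall i, ~ A i -> phi i = eB (invA i)).
  { intros i H. unfold phi. destruct excluded_middle_informative; tauto. }
  exists phi. split; [split | split]; auto.
  - intros i j E.
    destruct (classic (A i)) as [Ai | Ai]; destruct (classic (A j)) as [Aj | Aj].
    + apply HA in Ai as [k <-]. apply HA in Aj as [k' <-]. rewrite !Phi1 in E. f_equal; auto.
    + exfalso. apply HA in Ai as [k <-]. rewrite Phi1, Phi2 in E by auto.
      apply (EB1 (invA j)). apply HB. eauto.
    + exfalso. apply HA in Aj as [k <-]. rewrite Phi1, Phi2 in E by auto.
      apply (EB1 (invA i)). apply HB. eauto.
    + rewrite !Phi2 in E by auto. apply (Inj eB EB2) in E.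
      destruct (EA3 i Ai) as [n <-]. destruct (EA3 j Aj) as [m <-]. rewrite !InvA in E. subst; auto.
  - intros m. destruct (classic (B m)) as [Bm | Bm].
    + apply HB in Bm as [k <-]. exists (sA k). auto.
    + destruct (EB3 m Bm) as [n <-]. exists (eA n). rewrite Phi2 by auto. rewrite InvA; auto.
  - intros i Ai. rewrite Phi2 by auto. apply EB1.
Qed.

Lemma injective_tends_to_infinity (phi : nat -> nat) : (forall i j, phi i = phi j -> i = j) ->
  forall N, exists M, forall i, (M <= i)%nat -> (N <= phi i)%nat.
Proof.
  intros Inj N. induction N; [exists O; intros; lia|].
  destruct IHN as [M HM]. destruct (classic (exists i0, phi i0 = N)) as [[i0 Hi0] | No].
  - exists (Nat.max M (S i0)). intros i Hi. specialize (HM i ltac:(lia)).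
    destruct (Nat.eq_dec (phi i) N) as [E | E]; [|lia]. rewrite <- Hi0 in E. apply Inj in E. lia.
  - exists M. intros i Hi. specialize (HM i Hi). destruct (Nat.eq_dec (phi i) N); [|lia].
    exfalso; eauto.
Qed.

Lemma null_comp {X : TopSpace} (x : X) s phi : null_seq x s ->
  (forall i j, phi i = phi j -> i = j) ->
  null_seq x (fun i => s (phi i)).
Proof.
  intros [Ls Ns] Inj. split; auto.
  intros U HU Ux. destruct (Ns U HU Ux) as [N HN].
  destruct (injective_tends_to_infinity phi Inj N) as [M HM].
  exists M. intros; apply HN; auto.
Qed.

Lemma null_mix {X : TopSpace} (x : X) a b (P : nat -> bool) : null_seq x a -> null_seq x b ->
  null_seq x (fun i => if P i then b i else a i).
Proof.
  intros [La Na] [Lb Nb]. split; [intros i; destruct (P i); auto|].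
  intros U HU Ux. destruct (Na U HU Ux) as [N1 H1]. destruct (Nb U HU Ux) as [N2 H2].
  exists (Nat.max N1 N2). intros n Hn t Ht. destruct (P n); [apply H2 | apply H1]; auto; lia.
Qed.

(** * Well-defined infinite versus transfinite products *)

Lemma chain_map_reparam :
  cont1 chain_map /\ into01 chain_map /\ chain_map 0 = 0 /\ chain_map 1 = 1.
Proof. apply block_map_reparam, chain_map_data. Qed.

Lemma split_map_reparam :
  cont1 split_map /\ into01 split_map /\ split_map 0 = 0 /\ split_map 1 = 1.
Proof. apply block_map_reparam, split_map_data. Qed.

Lemma wd_inf_products_of_wd_transf {X : TopSpace} (x : X) :
  wd_transf_products x -> wd_inf_products x.
Proof.
  intros WT a b Na Nb Hab p q Hp Hq.
  pose proof (null_right_chain x a Na) as NRa. pose proof (null_right_chain x b Nb) as NRb.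
  pose proof (tau_prod_spec x _ (proj1 NRa)) as Ta.
  pose proof (tau_prod_spec x _ (proj1 NRb)) as Tb.
  assert (W : phtpy (tau_prod x (right_chain x a)) (tau_prod x (right_chain x b))).
  { apply (WT _ _ NRa NRb); auto. intros i. unfold right_chain. destruct Nat.eqb;
      auto using phtpy_const. }
  destruct chain_map_reparam as [C [I [E0 E1]]].
  apply phtpy_trans with (tau_prod x (right_chain x a)).
  { apply phtpy_sym, (phtpy_reparam_eq _ _ chain_map); auto.
    - apply (inf_prod_cont x a p Na Hp).
    - intros; apply (right_chain_tau_prod x a); auto. }
  apply phtpy_trans with (tau_prod x (right_chain x b)); auto.
  apply (phtpy_reparam_eq _ _ chain_map); auto.
  - apply (inf_prod_cont x b q Nb Hq).
  - intros; apply (right_chain_tau_prod x b); auto.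
Qed.

Lemma split_seq_even_agree {X : TopSpace} (x : X) a m p q n :
  (forall n k, (k < 2 ^ n)%nat -> k <> (2 ^ n - 1)%nat -> a (tau_index n k) = m (tau_index n k)) ->
  IsTauProd x a p -> IsTauProd x m q ->
  forall u, I01 u -> split_seq x a p (2 * n) u = split_seq x m q (2 * n) u.
Proof.
  intros Eq Hp Hq u Hu. rewrite !split_seq_even.
  set (t := block_lo n + u / 3 ^ (n + 1)). pose proof (shrunk_I01 n u Hu).
  destruct (block_facts n) as [[F1 F2] [F3 [F4 [F5 [F6 F7]]]]].
  assert (Tt : block_lo n <= t <= block_mid n) by (unfold t; lra).
  assert (It : I01 t) by (unfold I01; lra).
  destruct (classic (exists n' k', (k' < 2 ^ n')%nat /\ Ileft n' k' < t < Iright n' k'))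
    as [[n' [k' [Hk T]]] | NT].
  - rewrite (tau_prod_on x a p n' k' t Hp Hk), (tau_prod_on x m q n' k' t Hq Hk) by lra.
    rewrite Eq; auto. intros ->. apply (first_half_not_rightmost n n' t); auto.
  - rewrite (tau_prod_off x a p t Hp It), (tau_prod_off x m q t Hq It); auto;
      intros n' k' Hk T; apply NT; eauto.
Qed.

(* Through [split_map] both transfinite products are infinite products of termwise
   homotopic sequences. *)
Lemma tau_prod_change_right_chain {X : TopSpace} (x : X) a m p q :
  wd_inf_products x -> null_seq x a -> null_seq x m -> (forall i, phtpy (a i) (m i)) ->
  (forall n k, (k < 2 ^ n)%nat -> k <> (2 ^ n - 1)%nat -> a (tau_index n k) = m (tau_index n k)) ->
  IsTauProd x a p -> IsTauProd x m q -> phtpy p q.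
Proof.
  intros WI Na Nm Ham Eq Hp Hq.
  pose proof (null_split_seq x a p Na Hp) as NDa. pose proof (null_split_seq x m q Nm Hq) as NDm.
  pose proof (inf_prod_spec x _ (proj1 NDa)) as IA.
  pose proof (inf_prod_spec x _ (proj1 NDm)) as IM.
  assert (W : phtpy (inf_prod x (split_seq x a p)) (inf_prod x (split_seq x m q))).
  { apply (WI _ _ NDa NDm); auto. intros j.
    destruct (Nat.Even_or_Odd j) as [[n ->] | [n ->]].
    - apply (phtpy_ext (split_seq x a p (2 * n)) (split_seq x a p (2 * n))); auto.
      + intros u Hu. apply (split_seq_even_agree x a m p q n Eq Hp Hq u Hu).
      + apply phtpy_refl, (loop_cont x), (proj1 NDa).
    - rewrite !split_seq_odd. auto. }
  destruct split_map_reparam as [C [I [E0 E1]]].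
  apply phtpy_trans with (inf_prod x (split_seq x a p)).
  { apply (phtpy_reparam_eq _ _ split_map); auto.
    - apply (inf_prod_cont x _ _ NDa IA).
    - intros; apply (split_seq_inf_prod x a); auto. }
  apply phtpy_trans with (inf_prod x (split_seq x m q)); auto.
  apply phtpy_sym, (phtpy_reparam_eq _ _ split_map); auto.
  - apply (inf_prod_cont x _ _ NDm IM).
  - intros; apply (split_seq_inf_prod x m); auto.
Qed.

Definition rightmost_index (k : nat) : nat := tau_index k (2 ^ k - 1).

Lemma rightmost_index_inj k k' : rightmost_index k = rightmost_index k' -> k = k'.
Proof. intros E. apply tau_index_inj in E; try apply pow2_pred_lt. tauto. Qed.

Lemma rightmost_index_coinfinite n : exists m, (n <= m)%nat /\ ~ (exists k, rightmost_index k = m).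
Proof.
  exists (tau_index (S n) 0). split; [pose proof (tau_index_ge (S n) 0); lia|].
  intros [k E]. unfold rightmost_index in E.
  apply tau_index_inj in E; [| apply pow2_pred_lt | pose proof (pow2_pos (S n)); lia].
  destruct E as [E1 E]. subst. simpl in E. pose proof (pow2_pos n). lia.
Qed.

Lemma not_rightmost_index n k : (k < 2 ^ n)%nat -> k <> (2 ^ n - 1)%nat ->
  ~ (exists k0, rightmost_index k0 = tau_index n k).
Proof.
  intros Hk Hne [k0 E]. unfold rightmost_index in E.
  apply tau_index_inj in E; auto using pow2_pred_lt. destruct E; subst; lia.
Qed.

Lemma even_false i : ~ (exists k, (2 * k)%nat = i) -> Nat.even i = false.
Proof.
  intros H. destruct (Nat.Even_or_Odd i) as [[k ->] | [k ->]]; [exfalso; eauto|].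
  rewrite Nat.even_odd; auto.
Qed.

Lemma even_true i : ~ (exists k, (2 * k + 1)%nat = i) -> Nat.even i = true.
Proof.
  intros H. destruct (Nat.Even_or_Odd i) as [[k ->] | [k ->]]; [|exfalso; eauto].
  rewrite Nat.even_even; auto.
Qed.

(* Let [m] interleave [b] (even places) and [a] (odd places).  Permuting [a] so that
   the even places lie on the rightmost chain and the odd ones elsewhere, the change
   from [a] to [m] only concerns the rightmost chain; the same holds, with the roles of
   the parities exchanged, for the change from [m] to [b]. *)
Lemma wd_transf_products_of_wd_inf {X : TopSpace} (x : X) :
  transf_pi1_comm x -> wd_inf_products x -> wd_transf_products x.
Proof.
  intros TC WI a b Na Nb Hab p q Hp Hq.
  destruct (bijection_extending (fun i => exists k, rightmost_index k = i)
              (fun i => exists k, (2 * k)%nat = i) rightmost_index (fun k => (2 * k)%nat))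
    as [phi1 [B1 [P1a P1b]]]; try tauto.
  { apply rightmost_index_inj. } { intros; lia. } { apply rightmost_index_coinfinite. }
  { intros n. exists (2 * n + 1)%nat. split; [lia|]. intros [k E]. lia. }
  destruct (bijection_extending (fun i => exists k, rightmost_index k = i)
              (fun i => exists k, (2 * k + 1)%nat = i) rightmost_index (fun k => (2 * k + 1)%nat))
    as [phi2 [B2 [P2a P2b]]]; try tauto.
  { apply rightmost_index_inj. } { intros; lia. } { apply rightmost_index_coinfinite. }
  { intros n. exists (2 * n)%nat. split; [lia|]. intros [k E]. lia. }
  pose proof (proj1 B1) as Inj1. pose proof (proj1 B2) as Inj2.
  set (m := fun i => if Nat.even i then b i else a i).
  assert (Nm : null_seq x m) by (apply null_mix; auto).
  assert (Ex : forall s, null_seq x s -> IsTauProd x s (tau_prod x s))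
    by (intros s Ns; apply tau_prod_spec, Ns).
  assert (ExB : forall s phi, null_seq x s -> bijective_nat phi ->
            IsTauProd x (fun i => s (phi i)) (tau_prod x (fun i => s (phi i)))).
  { intros s phi Ns Bphi. apply Ex, null_comp; auto. apply Bphi. }
  assert (Hmix : forall i, phtpy (a i) (m i) /\ phtpy (m i) (b i)).
  { intros i. unfold m. pose proof (loop_cont x _ (null_loop x a i Na)).
    pose proof (loop_cont x _ (null_loop x b i Nb)).
    destruct (Nat.even i); split; auto using phtpy_refl. }
  apply phtpy_trans with (tau_prod x (fun i => a (phi1 i))); [apply (TC a phi1 Na B1); auto|].
  apply phtpy_trans with (tau_prod x (fun i => m (phi1 i))).
  { apply (tau_prod_change_right_chain x (fun i => a (phi1 i)) (fun i => m (phi1 i)) _ _ WI);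
      auto using null_comp; [intros; apply Hmix|].
    intros n k Hk Hne. unfold m. rewrite even_false; auto using not_rightmost_index. }
  apply phtpy_trans with (tau_prod x m); [apply phtpy_sym, (TC m phi1 Nm B1); auto|].
  apply phtpy_trans with (tau_prod x (fun i => m (phi2 i))); [apply (TC m phi2 Nm B2); auto|].
  apply phtpy_trans with (tau_prod x (fun i => b (phi2 i))).
  { apply (tau_prod_change_right_chain x (fun i => m (phi2 i)) (fun i => b (phi2 i)) _ _ WI);
      auto using null_comp; [intros; apply Hmix|].
    intros n k Hk Hne. unfold m. rewrite even_true; auto using not_rightmost_index. }
  apply phtpy_sym, (TC b phi2 Nb B2); auto.
Qed.
(** * Self-similarity of transfinite products *)

Definition into_right_subtree (i : nat) : nat := (i + 2 ^ S (tau_level i))%nat.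
Definition into_left_subtree (i : nat) : nat := (i + 2 ^ tau_level i)%nat.

Lemma into_right_subtree_index n k : (k < 2 ^ n)%nat ->
  into_right_subtree (tau_index n k) = tau_index (S n) (k + 2 ^ n).
Proof.
  intros Hk. unfold into_right_subtree. rewrite tau_level_index by auto. unfold tau_index.
  simpl. pose proof (pow2_pos n). lia.
Qed.
Lemma into_left_subtree_index n k : (k < 2 ^ n)%nat ->
  into_left_subtree (tau_index n k) = tau_index (S n) k.
Proof.
  intros Hk. unfold into_left_subtree. rewrite tau_level_index by auto. unfold tau_index.
  simpl. pose proof (pow2_pos n). lia.
Qed.

Lemma tau_prod_right_third {X : TopSpace} (x : X) s p : IsTauProd x s p ->
  IsTauProd x (fun i => s (into_right_subtree i)) (fun t => p (2/3 + t/3)).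
Proof.
  intros Hp. split.
  - intros n k t Hk Ht. change (2 ^ n + k - 1)%nat with (tau_index n k).
    rewrite into_right_subtree_index by auto.
    rewrite (tau_prod_on x s p (S n) (k + 2 ^ n)); auto.
    + f_equal. rewrite Ileft_hi, pow3_S by auto. field.
    + simpl; lia.
    + rewrite Ileft_hi, Iright_hi by auto. lra.
  - intros t Ht N. apply (tau_prod_off x s p); [auto| unfold I01 in *; lra|].
    intros n' k' Hk' T. destruct n' as [|m].
    + simpl in Hk'. assert (k' = 0%nat) by lia. subst. destruct first_interval as [A B].
      unfold I01 in *; lra.
    + destruct (lt_pow2_S m k' Hk') as [H|[k0 [H ->]]].
      * pose proof (Iright_left_third m k' H). unfold I01 in *; lra.
      * rewrite Ileft_hi, Iright_hi in T by auto. apply (N m k0 H). lra.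
Qed.

Lemma tau_prod_left_third {X : TopSpace} (x : X) s p : IsTauProd x s p ->
  IsTauProd x (fun i => s (into_left_subtree i)) (fun t => p (t/3)).
Proof.
  intros Hp. split.
  - intros n k t Hk Ht. change (2 ^ n + k - 1)%nat with (tau_index n k).
    rewrite into_left_subtree_index by auto.
    rewrite (tau_prod_on x s p (S n) k); auto.
    + f_equal. rewrite Ileft_lo, pow3_S by auto. field.
    + simpl; lia.
    + rewrite Ileft_lo, Iright_lo by auto. lra.
  - intros t Ht N. apply (tau_prod_off x s p); [auto| unfold I01 in *; lra|].
    intros n' k' Hk' T. destruct n' as [|m].
    + simpl in Hk'. assert (k' = 0%nat) by lia. subst. destruct first_interval as [A B].
      unfold I01 in *; lra.
    + destruct (lt_pow2_S m k' Hk') as [H|[k0 [H ->]]].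
      * rewrite Ileft_lo, Iright_lo in T by auto. apply (N m k' H). lra.
      * pose proof (Ileft_right_third m k0 H). unfold I01 in *; lra.
Qed.

Lemma tau_prod_middle_third {X : TopSpace} (x : X) s p u : IsTauProd x s p -> I01 u ->
  p (1/3 + u/3) = s O u.
Proof.
  intros Hp Hu. destruct first_interval as [A _]. rewrite <- A.
  replace (u/3) with (u / 3 ^ (0 + 1)) by (simpl; f_equal; ring).
  apply (tau_prod_affine x s p 0 0 u Hp); auto.
Qed.

Lemma right_chain_first_third {X : TopSpace} (x : X) b p t : IsTauProd x (right_chain x b) p ->
  0 <= t <= 1/3 -> p t = x.
Proof.
  intros Hp Ht. apply (tau_prod_off_const x _ p t Hp); [unfold I01; lra|].
  intros m k Hk T. destruct m as [|m].
  - simpl in Hk. assert (k = 0%nat) by lia. subst. destruct first_interval as [A B]. lra.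
  - destruct (lt_pow2_S m k Hk) as [H|[k0 [H ->]]].
    + apply right_chain_off; auto. simpl. pose proof (pow2_pos m). lia.
    + pose proof (Ileft_right_third m k0 H). lra.
Qed.


(** * Boundary paths of a homotopy square *)

(* [(sq_s, sq_t)] runs in five legs of duration 1/5 from (0,1/3) down to (0,0), along the
   side [t = 0], up the side [s = 1], back along [t = 1] and down to (0,2/3); [sq_q] is
   the matching position on the side [s = 1], read through [P (2/3 + u/3) = Q u]. *)
Definition sq_s (t : R) : R := clamp (5 * t + -1) - clamp (5 * t + -3).
Definition sq_t (t : R) : R :=
  1/3 + (-1/3) * clamp (5 * t + 0) + clamp (5 * t + -2) + (-1/3) * clamp (5 * t + -4).
Definition sq_q (t : R) : R := clamp (5 * t + -2) - clamp (5 * t + -4).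

Lemma sq_paths_cont : cont1 sq_s /\ cont1 sq_t /\ cont1 sq_q.
Proof.
  unfold sq_s, sq_t, sq_q. repeat split; try (apply cont1_minus; apply cont1_clamp_lin).
  repeat apply cont1_plus; try apply cont1_scal; try apply cont1_clamp_lin; apply cont1_const.
Qed.

Lemma sq_paths_in : into01 sq_s /\ into01 sq_t /\ into01 sq_q.
Proof. split; [|split]; intros u Hu; unfold sq_s, sq_t, sq_q, I01 in *; solve_clamp. Qed.

(* If [P ~ Q], [P = x] on the first third and the last third of [P] is [Q], then the
   middle third of [P] is null-homotopic: push it to the boundary of the homotopy square,
   where it becomes [Q] followed by its reverse. *)
Lemma middle_third_nullhomotopic {X : TopSpace} (x : X) (P Q : R -> X) :
  phtpy P Q -> cont01 Q ->
  (forall t, 0 <= t <= 1/3 -> P t = x) -> (forall t, I01 t -> P (2/3 + t/3) = Q t) ->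
  Q 0 = x -> Q 1 = x ->
  phtpy (fun t => P (1/3 + t/3)) (const_path x).
Proof.
  intros [H [Hc [H0 [H1 He]]]] CQ Pfirst Plast Q0 Q1.
  destruct sq_paths_cont as [Cs [Ct Cq]]. destruct sq_paths_in as [Is [Itg Iq]].
  assert (P0 : P 0 = x) by (apply Pfirst; lra).
  assert (P1 : P 1 = x) by (replace 1 with (2/3 + 1/3) by field; rewrite Plast; auto).
  assert (Sq : phtpy (fun t => H ((fun _ => 0) t) ((fun t => /3 * t + 1/3) t))
                     (fun t => H (sq_s t) (sq_t t))).
  { apply phtpy_in_square; auto using cont1_const, cont1_lin;
      try (intros t Ht; unfold I01 in *; lra); unfold sq_s, sq_t; solve_clamp. }
  assert (OnBoundary : forall t, I01 t -> H (sq_s t) (sq_t t) = Q (sq_q t)).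
  { intros t Ht. pose proof (Is t Ht). pose proof (Itg t Ht). unfold I01 in Ht.
    destruct (Rle_dec t (1/5)).
    { replace (sq_s t) with 0 by (unfold sq_s; solve_clamp).
      replace (sq_q t) with 0 by (unfold sq_q; solve_clamp).
      rewrite H0 by auto. rewrite Q0. apply Pfirst. unfold sq_t; solve_clamp. }
    destruct (Rle_dec t (2/5)).
    { replace (sq_t t) with 0 by (unfold sq_t; solve_clamp).
      replace (sq_q t) with 0 by (unfold sq_q; solve_clamp).
      rewrite (proj1 (He _ (Is t ltac:(unfold I01; lra)))), P0, Q0; auto. }
    destruct (Rle_dec t (3/5)).
    { replace (sq_s t) with 1 by (unfold sq_s; solve_clamp).
      replace (sq_q t) with (sq_t t) by (unfold sq_q, sq_t; solve_clamp). auto. }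
    destruct (Rle_dec t (4/5)).
    { replace (sq_t t) with 1 by (unfold sq_t; solve_clamp).
      replace (sq_q t) with 1 by (unfold sq_q; solve_clamp).
      rewrite (proj2 (He _ (Is t ltac:(unfold I01; lra)))), P1, Q1; auto. }
    replace (sq_s t) with 0 by (unfold sq_s; solve_clamp).
    replace (sq_t t) with (2/3 + sq_q t / 3) by (unfold sq_q, sq_t; solve_clamp).
    assert (I01 (sq_q t)) by (apply Iq; unfold I01; lra).
    rewrite H0 by (unfold I01 in *; lra). apply Plast; auto. }
  apply (phtpy_ext (fun t => H 0 (/3 * t + 1/3)) (fun _ => Q 0)).
  - intros t Ht. rewrite H0 by (unfold I01 in *; lra). f_equal. field.
  - intros t _. rewrite Q0. reflexivity.
  - apply phtpy_trans with (fun t => Q (sq_q t)).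
    + eapply phtpy_ext; [| |exact Sq]; auto.
    + apply phtpy_reparam_null; auto; unfold sq_q; solve_clamp.
Qed.

(* [(arc_s, arc_t)] runs in four legs of duration 1/4 from (0,0) along [t = 0], up the
   side [s = 1], back along [t = 1] and down to (0,2/3). *)
Definition arc_s (t : R) : R := clamp (4 * t + 0) - clamp (4 * t + -2).
Definition arc_t (t : R) : R := clamp (4 * t + -1) + (-1/3) * clamp (4 * t + -3).

Lemma arc_paths : cont1 arc_s /\ cont1 arc_t /\ into01 arc_s /\ into01 arc_t.
Proof.
  unfold arc_s, arc_t. split; [|split].
  - apply cont1_minus; apply cont1_clamp_lin.
  - apply cont1_plus; [apply cont1_clamp_lin | apply cont1_scal, cont1_clamp_lin].
  - split; intros u Hu; unfold I01 in *; solve_clamp.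
Qed.

Lemma clamp_reparam a b : a * 0 + b <= 0 -> 1 <= a * 1 + b ->
  cont1 (fun t => clamp (a * t + b)) /\ into01 (fun t => clamp (a * t + b)) /\
  clamp (a * 0 + b) = 0 /\ clamp (a * 1 + b) = 1.
Proof.
  intros H0 H1.
  split; [|split; [|split]]; auto using cont1_clamp_lin, into01_clamp_lin, clamp_le0, clamp_ge1.
Qed.

(* If [alpha], a constant loop and the reverse of [beta], each run in a third of the
   time, form a null-homotopic loop [P], then [alpha ~ beta]: [alpha] is the side [s = 0],
   [t <= 2/3] of the null-homotopy, and the other way round the square is [beta]. *)
Lemma phtpy_of_nullhomotopic_thirds {X : TopSpace} (x : X) (P alpha beta : R -> X) :
  phtpy P (const_path x) -> cont01 alpha -> cont01 beta ->
  (forall t, I01 t -> P (t / 3) = alpha t) -> (forall t, I01 t -> P (1/3 + t / 3) = x) ->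
  (forall t, I01 t -> P (2/3 + t / 3) = beta (1 - t)) ->
  phtpy alpha beta.
Proof.
  intros [H [Hc [H0 [H1 He]]]] Ca Cb Left Mid Right.
  assert (Px : P 0 = x /\ P 1 = x).
  { destruct (He 1 I01_1) as [E0 E1]. rewrite <- E0, <- E1, !H1; auto. }
  assert (A1 : alpha 1 = x) by (rewrite <- Left, <- (Mid 0); auto; f_equal; field).
  assert (B0 : beta 0 = x).
  { rewrite <- (proj2 Px), <- Rminus_diag with 1, <- Right by auto. f_equal. field. }
  destruct arc_paths as [Cs [Ct [Is It]]].
  destruct (clamp_reparam 2 0) as [G0c [G0i [G00 G01]]]; try lra.
  destruct (clamp_reparam 4 (-3)) as [G1c [G1i [G10 G11]]]; try lra.
  apply phtpy_trans with (fun t => alpha (clamp (2 * t + 0)));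
    [apply phtpy_sym, phtpy_reparam; auto|].
  apply phtpy_trans with (fun t => beta (clamp (4 * t + -3))); [|apply phtpy_reparam; auto].
  apply (phtpy_ext (fun t => H ((fun _ => 0) t) ((fun t => 2/3 * t + 0) t))
                   (fun t => H (arc_s t) (arc_t t))).
  - intros t Ht. cbv beta. rewrite H0 by (unfold I01 in *; lra). unfold I01 in Ht.
    destruct (Rle_dec t (1/2)).
    + rewrite clamp_id by (unfold I01; lra). rewrite <- Left by (unfold I01; lra). f_equal; field.
    + rewrite clamp_ge1, A1 by lra.
      replace (2/3 * t + 0) with (1/3 + (2 * t - 1) / 3) by field. apply Mid. unfold I01; lra.
  - intros t Ht. pose proof (Is t Ht). pose proof (It t Ht). unfold I01 in Ht.
    destruct (Rle_dec t (1/2)).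
    + rewrite (clamp_le0 (4 * t + -3)) by lra. rewrite B0.
      destruct (Rle_dec t (1/4)).
      * replace (arc_t t) with 0 by (unfold arc_t; solve_clamp). rewrite (proj1 (He _ H2)).
        apply Px.
      * replace (arc_s t) with 1 by (unfold arc_s; solve_clamp). auto.
    + destruct (Rle_dec t (3/4)).
      * rewrite (clamp_le0 (4 * t + -3)) by lra. rewrite B0.
        replace (arc_t t) with 1 by (unfold arc_t; solve_clamp). rewrite (proj2 (He _ H2)).
        apply Px.
      * replace (arc_s t) with 0 by (unfold arc_s; solve_clamp).
        replace (arc_t t) with (2/3 + (1 - (4 * t - 3)) / 3) by (unfold arc_t; solve_clamp).
        rewrite H0, Right by (unfold I01; lra). rewrite clamp_id by (unfold I01; lra).
        f_equal; ring.
  - apply phtpy_in_square; auto using cont1_const, cont1_lin;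
      try (intros t Ht; unfold I01 in *; lra); unfold arc_s, arc_t; solve_clamp.
Qed.

(** * Homotopically Hausdorff from well-defined transfinite products *)

Lemma null_seq_of_small_representatives {X : TopSpace} (x : X) (a : R -> X) :
  first_countable_at x ->
  (forall U, is_open X U -> U x ->
     exists b, is_loop x b /\ (forall t, I01 t -> U (b t)) /\ phtpy b a) ->
  exists bb, null_seq x bb /\ forall n, phtpy (bb n) a.
Proof.
  intros [B [HB1 HB2]] Small.
  set (Uf := fix Uf n := match n with O => B O | S n => fun z => Uf n z /\ B (S n) z end).
  assert (Uop : forall n, is_open X (Uf n) /\ Uf n x).
  { induction n; simpl; [apply HB1|]. split.
    - apply open_inter; [apply IHn | apply HB1].
    - split; [apply IHn | apply HB1]. }
  assert (Usub : forall n i, (i <= n)%nat -> forall z, Uf n z -> B i z).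
  { induction n; intros i Hi z Hz; [assert (i = 0%nat) by lia; subst; auto|].
    destruct Hz as [Hz1 Hz2]. destruct (Nat.eq_dec i (S n)) as [-> | Ne]; auto.
    apply (IHn i); auto; lia. }
  assert (Ch : forall n, { b | is_loop x b /\ (forall t, I01 t -> Uf n (b t)) /\ phtpy b a }).
  { intros n. apply constructive_indefinite_description, Small; apply Uop. }
  exists (fun n => proj1_sig (Ch n)).
  assert (Hbb : forall n, is_loop x (proj1_sig (Ch n)) /\
                  (forall t, I01 t -> Uf n (proj1_sig (Ch n) t)) /\ phtpy (proj1_sig (Ch n)) a).
  { intros n. destruct (Ch n); auto. }
  split; [split|]; [intros n; apply Hbb | | intros n; apply Hbb].
  intros U HU Ux. destruct (HB2 U HU Ux) as [m Hm].
  exists m. intros n Hn t Ht. apply Hm, (Usub n); auto. apply Hbb; auto.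
Qed.

Lemma right_chain_shift {X : TopSpace} (x : X) (b : nat -> R -> X) i :
  right_chain x b (into_right_subtree i) = right_chain x (fun n => b (S n)) i.
Proof.
  destruct (tau_index_surj i) as [n [k [Hk ->]]]. rewrite into_right_subtree_index by auto.
  destruct (Nat.eq_dec k (2 ^ n - 1)) as [-> | Ne].
  - replace (2 ^ n - 1 + 2 ^ n)%nat with (2 ^ S n - 1)%nat by (simpl; pose proof (pow2_pos n); lia).
    rewrite !right_chain_on. auto.
  - rewrite !right_chain_off; auto; simpl; lia.
Qed.

(* Otherwise some nontrivial [a] has representatives [b n] in every neighbourhood; the
   transfinite products of the right chains of [b] and of its shift agree, which makes
   [b 0] null-homotopic. *)
Lemma hom_hausdorff_of_wd_transf {X : TopSpace} (x : X) :
  first_countable_at x -> wd_transf_products x -> homotopically_hausdorff x.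
Proof.
  intros FC WT a La Hna. apply NNPP; intro Hcon.
  destruct (null_seq_of_small_representatives x a FC) as [bb [Nbb Hbb]].
  { intros U HU Ux. apply NNPP; intro Hn. apply Hcon. exists U. repeat split; auto.
    intros b Lb Hb Hph. apply Hn; eauto. }
  assert (Nbb' : null_seq x (fun n => bb (S n))) by (apply null_comp; auto; intros; lia).
  pose proof (null_right_chain x _ Nbb) as NR. pose proof (null_right_chain x _ Nbb') as NR'.
  set (P := tau_prod x (right_chain x bb)).
  assert (HP : IsTauProd x (right_chain x bb) P) by apply tau_prod_spec, NR.
  set (Q := fun t => P (2/3 + t/3)).
  assert (HQ : IsTauProd x (right_chain x (fun n => bb (S n))) Q).
  { apply (tau_prod_seq_ext x (fun i => right_chain x bb (into_right_subtree i)));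
      [apply right_chain_shift | apply tau_prod_right_third; auto]. }
  assert (PQ : phtpy P Q).
  { apply (WT _ _ NR NR'); auto. intros i. unfold right_chain. destruct Nat.eqb.
    - apply phtpy_trans with a; [apply Hbb | apply phtpy_sym, Hbb].
    - apply phtpy_const. }
  apply Hna, phtpy_trans with (bb O); [apply phtpy_sym, Hbb|].
  apply (phtpy_ext (fun t => P (1/3 + t/3)) (const_path x)); auto.
  - intros t Ht. rewrite (tau_prod_middle_third x _ _ t HP Ht).
    change O with (tau_index 0 (2 ^ 0 - 1)) at 1. rewrite right_chain_on. auto.
  - apply (middle_third_nullhomotopic x P Q PQ); auto.
    + apply (tau_prod_cont x _ _ NR' HQ).
    + intros t Ht. apply (right_chain_first_third x bb P); auto.
    + apply (tau_prod_0 x _ _ HQ).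
    + apply (tau_prod_1 x _ _ HQ).
Qed.
(** * Well-defined infinite products from homotopically Hausdorff *)

Lemma inf_prod_agree {X : TopSpace} (x : X) s s' P P' t :
  (forall i, is_loop x (s i)) -> (forall i, is_loop x (s' i)) ->
  IsInfProd x s P -> IsInfProd x s' P' -> I01 t ->
  (forall k, slot_lo k < t < slot_hi k -> s k = s' k) -> P t = P' t.
Proof.
  intros Ls Ls' HP HP' Ht E.
  destruct (classic (exists k, slot_lo k < t < slot_hi k)) as [[k T]|N].
  - rewrite (inf_prod_on x s P k t HP), (inf_prod_on x s' P' k t HP') by lra. rewrite E; auto.
  - rewrite (inf_prod_off x s P t), (inf_prod_off x s' P' t); auto; intros k T; apply N; eauto.
Qed.

Lemma slot_bounds k : 0 <= slot_lo k /\ slot_lo k < slot_hi k /\ slot_hi k <= 1.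
Proof.
  pose proof (slot_lo_I01 k). pose proof (slot_lo_lt_hi k). pose proof (slot_hi_lt1 k).
  repeat split; lra.
Qed.

Lemma inf_prod_change_one {X : TopSpace} (x : X) s s' P P' j : null_seq x s -> null_seq x s' ->
  IsInfProd x s P -> IsInfProd x s' P' -> (forall k, k <> j -> s k = s' k) ->
  phtpy (s j) (s' j) -> phtpy P P'.
Proof.
  intros Ns Ns' HP HP' E Hj. destruct (slot_bounds j) as [B1 [B2 B3]].
  apply (phtpy_local P P' (slot_lo j) (slot_hi j)); auto.
  - apply (inf_prod_cont x s P Ns HP).
  - intros t Ht Hout. apply (inf_prod_agree x s s' P P' t (proj1 Ns) (proj1 Ns') HP HP' Ht).
    intros k T. apply E. intros ->. lra.
  - apply (phtpy_ext (s j) (s' j)); auto; intros u Hu; symmetry; rewrite Rmult_comm;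
      apply (inf_prod_affine x); auto.
Qed.

Definition tent (m u : R) : R := clamp ((/ m) * u + 0) - clamp ((/ (1 - m)) * u + (- m / (1 - m))).

Lemma tent_reparam m : 0 < m < 1 -> cont1 (tent m) /\ into01 (tent m) /\ tent m 0 = 0 /\
  tent m 1 = 0.
Proof.
  intros Hm. assert (0 < / m) by (apply Rinv_0_lt_compat; lra).
  assert (0 < / (1 - m)) by (apply Rinv_0_lt_compat; lra).
  split; [|split; [|split]].
  - unfold tent. apply cont1_minus; apply cont1_clamp_lin.
  - intros u Hu. unfold tent. destruct (Rle_dec u m).
    + rewrite (clamp_le0 (/ (1 - m) * u + - m / (1 - m))).
      * rewrite clamp_id. unfold I01 in *; split; [nra|]. apply Rmult_le_reg_l with m; [lra|].
        field_simplify; lra. unfold I01 in *; split; [nra|]. apply Rmult_le_reg_l with m; [lra|].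
        field_simplify; lra.
      * apply Rmult_le_reg_l with (1 - m); [lra|]. field_simplify; lra.
    + rewrite (clamp_ge1 (/ m * u + 0)).
      * rewrite clamp_id. unfold I01 in *; split. apply Rmult_le_reg_l with (1 - m); [lra|].
        field_simplify; lra.
        apply Rmult_le_reg_l with (1 - m); [lra|]. field_simplify; lra.
        unfold I01 in *; split. apply Rmult_le_reg_l with (1 - m); [lra|]. field_simplify; lra.
        apply Rmult_le_reg_l with (1 - m); [lra|]. field_simplify; lra.
      * apply Rmult_le_reg_l with m; [lra|]. field_simplify; lra.
  - unfold tent. rewrite Rmult_0_r, Rplus_0_l, clamp_le0, clamp_le0; try lra.
    rewrite Rmult_0_r, Rplus_0_l. unfold Rdiv. rewrite <- Ropp_mult_distr_l. nra.
  - unfold tent. rewrite clamp_ge1, clamp_ge1; [lra| |]. 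
    replace (/ (1 - m) * 1 + - m / (1 - m)) with 1 by (field; lra). lra.
    rewrite Rmult_1_r, Rplus_0_r. apply Rmult_le_reg_l with m; [lra|]. field_simplify; lra.
Qed.

Lemma slot_param_eq k t : slot_param k t = (t - slot_lo k) / (slot_hi k - slot_lo k).
Proof.
  unfold slot_param. rewrite slot_hi_len.
  replace (slot_lo k + / (INR (k + 1) * INR (k + 2)) - slot_lo k) with
    (/ (INR (k + 1) * INR (k + 2))) by ring.
  unfold Rdiv. rewrite Rinv_inv. ring.
Qed.

Definition pair_ratio (k : nat) : R := (slot_hi k - slot_lo k) / (slot_hi (S k) - slot_lo k).

Lemma pair_ratio_bounds k : 0 < pair_ratio k < 1.
Proof.
  destruct (slot_bounds k) as [B1 [B2 B3]]. destruct (slot_bounds (S k)) as [C1 [C2 C3]].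
  rewrite <- slot_hi_lo in C2. unfold pair_ratio. split; [apply Rdiv_lt_0_compat; lra|].
  apply Rmult_lt_reg_r with (slot_hi (S k) - slot_lo k); [lra|]. field_simplify; lra.
Qed.

Lemma inf_prod_two_slots {X : TopSpace} (x : X) s P k : IsInfProd x s P -> s (S k) = rev (s k) ->
  forall u, I01 u ->
    P (slot_lo k + u * (slot_hi (S k) - slot_lo k)) = s k (tent (pair_ratio k) u).
Proof.
  intros HP Er u Hu. pose proof (pair_ratio_bounds k) as Hm.
  destruct (slot_bounds k) as [B1 [B2 B3]]. destruct (slot_bounds (S k)) as [C1 [C2 C3]].
  rewrite <- slot_hi_lo in C1, C2.
  set (l := slot_lo k) in *. set (w := slot_hi k) in *. set (r := slot_hi (S k)) in *.
  set (m := pair_ratio k) in *.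
  assert (Em : m * (r - l) = w - l) by (unfold m, pair_ratio; fold l w r; field; lra).
  set (t := l + u * (r - l)). unfold I01 in Hu. unfold tent.
  destruct (Rle_dec u m).
  - assert (Tt : l <= t <= w).
    { unfold t. assert (u * (r - l) <= m * (r - l)) by (apply Rmult_le_compat_r; lra). nra. }
    rewrite (inf_prod_on x s P k t HP Tt). f_equal. rewrite slot_param_eq. fold l w.
    rewrite (clamp_le0 (/ (1 - m) * u + - m / (1 - m))),
            (clamp_id (/ m * u + 0)).
    + unfold t. rewrite <- Em. field. lra.
    + split; [apply Rplus_le_le_0_compat; [apply Rmult_le_pos; [left; apply Rinv_0_lt_compat|]|];
        lra|].
      apply Rmult_le_reg_l with m; [lra|]. field_simplify; lra.
    + apply Rmult_le_reg_l with (1 - m); [lra|]. field_simplify; lra.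
  - assert (Tt : slot_lo (S k) <= t <= slot_hi (S k)).
    { rewrite <- slot_hi_lo. fold w r. unfold t.
      assert (m * (r - l) <= u * (r - l)) by (apply Rmult_le_compat_r; lra). nra. }
    rewrite (inf_prod_on x s P (S k) t HP Tt), Er. unfold rev. f_equal.
    rewrite slot_param_eq, <- slot_hi_lo. fold w r.
    rewrite (clamp_ge1 (/ m * u + 0)), (clamp_id (/ (1 - m) * u + - m / (1 - m))).
    + unfold t. replace w with (l + m * (r - l)) by lra. field. repeat split; nra.
    + split; apply Rmult_le_reg_l with (1 - m); try lra; field_simplify; lra.
    + apply Rmult_le_reg_l with m; [lra|]. field_simplify; lra.
Qed.

Lemma inf_prod_cancel_pair {X : TopSpace} (x : X) s s' P P' k : null_seq x s -> null_seq x s' ->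
  IsInfProd x s P -> IsInfProd x s' P' ->
  (forall j, j <> k -> j <> S k -> s j = s' j) ->
  s (S k) = rev (s k) -> s' k = const_path x -> s' (S k) = const_path x ->
  phtpy P P'.
Proof.
  intros Ns Ns' HP HP' E Er E1 E2.
  destruct (slot_bounds k) as [B1 [B2 B3]]. destruct (slot_bounds (S k)) as [C1 [C2 C3]].
  rewrite <- slot_hi_lo in C1, C2.
  destruct (tent_reparam (pair_ratio k) (pair_ratio_bounds k)) as [Mc [Mi [M0 M1]]].
  apply (phtpy_local P P' (slot_lo k) (slot_hi (S k))); auto; try lra.
  - apply (inf_prod_cont x s P Ns HP).
  - intros t Ht Hout. apply (inf_prod_agree x s s' P P' t (proj1 Ns) (proj1 Ns') HP HP' Ht).
    intros j T. apply E; intros ->; [|rewrite <- slot_hi_lo in T]; lra.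
  - apply phtpy_trans with (fun _ => s k 0).
    + apply (phtpy_ext (fun u => s k (tent (pair_ratio k) u)) (fun _ => s k 0)); auto.
      * intros u Hu. symmetry. apply (inf_prod_two_slots x s P k); auto.
      * apply phtpy_reparam_null; auto. apply (loop_cont x), (null_loop x s _ Ns).
    + apply (phtpy_ext (fun _ => x) (fun _ => x)).
      * intros; destruct (null_loop x s k Ns) as [_ [A0 _]]; auto.
      * intros u Hu. set (t := slot_lo k + u * (slot_hi (S k) - slot_lo k)).
        assert (Tt : slot_lo k <= t <= slot_hi (S k)) by (unfold t; unfold I01 in Hu; split; nra).
        destruct (Rle_dec t (slot_hi k)).
        -- rewrite (inf_prod_on x s' P' k t HP') by lra. rewrite E1. auto.
        -- rewrite (inf_prod_on x s' P' (S k) t HP') by (rewrite <- slot_hi_lo; lra). rewrite E2.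
           auto.
      * apply phtpy_const.
Qed.

Definition alt_seq {X : TopSpace} (a b : nat -> R -> X) (j : nat) : R -> X :=
  if Nat.even j then a (Nat.div2 j) else rev (b (Nat.div2 j)).
Definition alt_seq_from {X : TopSpace} (x : X) a b (K : nat) (j : nat) : R -> X :=
  if Nat.ltb j (2 * K) then const_path x else alt_seq a b j.
Definition alt_seq_swap {X : TopSpace} (x : X) a b (K : nat) (j : nat) : R -> X :=
  if Nat.eqb j (2 * K) then b K else alt_seq_from x a b K j.

Lemma alt_seq_even {X : TopSpace} (a b : nat -> R -> X) n : alt_seq a b (2 * n) = a n.
Proof. unfold alt_seq. rewrite Nat.even_even, Nat.div2_double. auto. Qed.
Lemma alt_seq_odd {X : TopSpace} (a b : nat -> R -> X) n : alt_seq a b (2 * n + 1) = rev (b n).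
Proof. unfold alt_seq. rewrite Nat.even_odd, Nat.div2_odd'. auto. Qed.

Lemma alt_seq_tail {X : TopSpace} (a b : nat -> R -> X) (U : X -> Prop) N :
  (forall n, (N <= n)%nat -> forall t, I01 t -> U (a n t)) ->
  (forall n, (N <= n)%nat -> forall t, I01 t -> U (b n t)) ->
  forall j, (2 * N <= j)%nat -> forall t, I01 t -> U (alt_seq a b j t).
Proof.
  intros Ha Hb j Hj t Ht. destruct (Nat.Even_or_Odd j) as [[n ->]|[n ->]].
  - rewrite alt_seq_even. apply Ha; auto; lia.
  - rewrite alt_seq_odd. unfold rev. apply Hb; [lia|unfold I01 in *; lra].
Qed.

Lemma null_alt_seq {X : TopSpace} (x : X) a b : null_seq x a -> null_seq x b ->
  null_seq x (alt_seq a b).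
Proof.
  intros [La Na] [Lb Nb]. split.
  - intros j. unfold alt_seq. destruct Nat.even; auto using rev_loop.
  - intros U HU Ux. destruct (Na U HU Ux) as [N1 H1]. destruct (Nb U HU Ux) as [N2 H2].
    exists (2 * Nat.max N1 N2)%nat. apply alt_seq_tail; intros; [apply H1|apply H2]; auto; lia.
Qed.

Lemma null_alt_seq_from {X : TopSpace} (x : X) a b K : null_seq x a -> null_seq x b ->
  null_seq x (alt_seq_from x a b K).
Proof.
  intros Na Nb. destruct (null_alt_seq x a b Na Nb) as [Lz Nz]. split.
  - intros j. unfold alt_seq_from. destruct Nat.ltb; auto using const_loop.
  - intros U HU Ux. destruct (Nz U HU Ux) as [N HN]. exists N. intros j Hj t Ht.
    unfold alt_seq_from. destruct Nat.ltb; auto.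
Qed.

Lemma null_alt_seq_swap {X : TopSpace} (x : X) a b K : null_seq x a -> null_seq x b ->
  null_seq x (alt_seq_swap x a b K).
Proof.
  intros Na Nb. destruct (null_alt_seq_from x a b K Na Nb) as [Lz Nz]. split.
  - intros j. unfold alt_seq_swap. destruct Nat.eqb; auto. apply Nb.
  - intros U HU Ux. destruct (Nz U HU Ux) as [N HN]. exists (Nat.max N (S (2 * K))).
    intros j Hj t Ht.
    unfold alt_seq_swap. destruct (Nat.eqb_spec j (2 * K)); [lia|]. apply HN; auto; lia.
Qed.

Lemma alt_seq_from_phtpy {X : TopSpace} (x : X) a b : null_seq x a -> null_seq x b ->
  (forall n, phtpy (a n) (b n)) ->
  forall K, phtpy (inf_prod x (alt_seq a b)) (inf_prod x (alt_seq_from x a b K)).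
Proof.
  intros Na Nb Hab. pose proof (null_alt_seq x a b Na Nb) as Nz.
  induction K.
  - replace (alt_seq_from x a b 0) with (alt_seq a b).
    + apply phtpy_refl. apply (inf_prod_cont x _ _ Nz), inf_prod_spec, Nz.
    + apply functional_extensionality; intros j. unfold alt_seq_from. simpl. auto.
  - pose proof (null_alt_seq_from x a b K Na Nb) as NK.
    pose proof (null_alt_seq_from x a b (S K) Na Nb) as NSK.
    pose proof (null_alt_seq_swap x a b K Na Nb) as NW.
    apply phtpy_trans with (inf_prod x (alt_seq_from x a b K)); auto.
    apply phtpy_trans with (inf_prod x (alt_seq_swap x a b K)).
    + apply (inf_prod_change_one x (alt_seq_from x a b K) (alt_seq_swap x a b K) _ _ (2 * K) NK
        NW); try apply inf_prod_spec; try apply NK; try apply NW.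
      * intros k Hk. unfold alt_seq_swap. destruct (Nat.eqb_spec k (2 * K)); [lia|auto].
      * unfold alt_seq_swap, alt_seq_from. rewrite Nat.eqb_refl, Nat.ltb_irrefl, alt_seq_even. auto.
    + apply (inf_prod_cancel_pair x (alt_seq_swap x a b K) (alt_seq_from x a b (S K)) _ _
               (2 * K) NW NSK); try apply inf_prod_spec; try apply NW; try apply NSK;
        replace (S (2 * K)) with (2 * K + 1)%nat by lia.
      * intros k H1 H2. unfold alt_seq_swap, alt_seq_from.
        destruct (Nat.eqb_spec k (2 * K)); [lia|].
        destruct (Nat.ltb_spec k (2 * K)); destruct (Nat.ltb_spec k (2 * S K)); auto; lia.
      * unfold alt_seq_swap, alt_seq_from. destruct (Nat.eqb_spec (2 * K + 1) (2 * K)); [lia|].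
        destruct (Nat.ltb_spec (2 * K + 1) (2 * K)); [lia|]. rewrite alt_seq_odd, Nat.eqb_refl.
        auto.
      * unfold alt_seq_from. destruct (Nat.ltb_spec (2 * K) (2 * S K)); [auto|lia].
      * unfold alt_seq_from. destruct (Nat.ltb_spec (2 * K + 1) (2 * S K)); [auto|lia].
Qed.

Lemma slot_param_I01 k t : slot_lo k < t < slot_hi k -> I01 (slot_param k t).
Proof.
  intros T. rewrite slot_param_eq. unfold I01. split.
  - apply Rdiv_le_0_compat; lra.
  - apply Rmult_le_reg_r with (slot_hi k - slot_lo k); [lra|]. field_simplify; lra.
Qed.

(* Dropping the first pairs [a n, rev (b n)] does not change the homotopy class, and what
   remains lies in any given neighbourhood of [x]. *)
Lemma alt_prod_nullhomotopic {X : TopSpace} (x : X) a b : homotopically_hausdorff x ->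
  null_seq x a -> null_seq x b ->
  (forall n, phtpy (a n) (b n)) -> phtpy (inf_prod x (alt_seq a b)) (const_path x).
Proof.
  intros HH Na Nb Hab. pose proof (null_alt_seq x a b Na Nb) as Nz.
  apply NNPP; intro Hn.
  destruct (HH (inf_prod x (alt_seq a b)) (inf_prod_loop x _ _ Nz (inf_prod_spec x _ (proj1 Nz)))
    Hn) as [U [HU [Ux HUb]]].
  destruct (proj2 Na U HU Ux) as [N1 H1]. destruct (proj2 Nb U HU Ux) as [N2 H2].
  set (N := Nat.max N1 N2).
  pose proof (null_alt_seq_from x a b N Na Nb) as NN.
  apply (HUb (inf_prod x (alt_seq_from x a b N))).
  - apply (inf_prod_loop x _ _ NN), inf_prod_spec, NN.
  - intros t Ht. destruct (classic (exists j, slot_lo j < t < slot_hi j)) as [[j T]|NT].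
    + rewrite (inf_prod_on x (alt_seq_from x a b N) _ j t (inf_prod_spec x _ (proj1 NN))) by lra.
      pose proof (slot_param_I01 j t T) as Ip. unfold alt_seq_from.
      destruct (Nat.ltb_spec j (2 * N)); [auto|].
      apply (alt_seq_tail a b U N); auto; intros; [apply H1|apply H2]; auto; unfold N in *; lia.
    + rewrite (inf_prod_off x (alt_seq_from x a b N) _ t (proj1 NN) (inf_prod_spec x _ (proj1 NN))
        Ht); auto.
      intros j T; apply NT; eauto.
  - apply phtpy_sym, alt_seq_from_phtpy; auto.
Qed.

Definition middle_index (k : nat) : nat :=
  tau_index (S (Nat.div2 k)) (2 ^ Nat.div2 k - 1 + (if Nat.even k then 0 else 1)).

Lemma middle_index_even n : middle_index (2 * n) = tau_index (S n) (2 ^ n - 1).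
Proof. unfold middle_index. rewrite Nat.even_even, Nat.div2_double. f_equal. lia. Qed.
Lemma middle_index_odd n : middle_index (2 * n + 1) = tau_index (S n) (2 ^ n).
Proof.
  unfold middle_index. rewrite Nat.even_odd, Nat.div2_odd'. f_equal. pose proof (pow2_pos n).
  lia.
Qed.

Lemma middle_index_valid k :
  (2 ^ Nat.div2 k - 1 + (if Nat.even k then 0 else 1) < 2 ^ S (Nat.div2 k))%nat.
Proof. pose proof (pow2_pos (Nat.div2 k)). simpl. destruct Nat.even; lia. Qed.

Lemma middle_index_inj k k' : middle_index k = middle_index k' -> k = k'.
Proof.
  unfold middle_index. intros E. apply tau_index_inj in E; try apply middle_index_valid.
  destruct E as [E1 E2].
  injection E1 as E1. rewrite E1 in E2.
  pose proof (Nat.div2_odd k). pose proof (Nat.div2_odd k').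
  rewrite <- !Nat.negb_even in H, H0. rewrite E1 in H.
  destruct (Nat.even k), (Nat.even k'); simpl in *; lia.
Qed.

Lemma middle_index_level n k : (k < 2 ^ S n)%nat -> forall k0,
  middle_index k0 = tau_index (S n) k ->
  k = (2 ^ n - 1)%nat \/ k = (2 ^ n)%nat.
Proof.
  intros Hk k0 E. unfold middle_index in E.
  apply tau_index_inj in E; [|apply middle_index_valid|auto].
  destruct E as [E1 E2]. injection E1 as E1. subst n.
  destruct Nat.even; [left|right]; pose proof (pow2_pos (Nat.div2 k0)); lia.
Qed.

Lemma middle_index_coinfinite n : exists m, (n <= m)%nat /\ ~ (exists k, middle_index k = m).
Proof.
  exists (tau_index (S (S n)) 0). split. pose proof (tau_index_ge (S (S n)) 0). lia.
  intros [k E]. destruct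
    (middle_index_level (S n) 0 ltac:(pose proof (pow2_pos (S (S n))); lia) k E) as [H|H];
    simpl in H; pose proof (pow2_pos n); lia.
Qed.


(* The [k]-th element of the right chain of [alt_seq a b] is moved next to the middle
   third: [a n] to the rightmost interval of level [n+1] of the left subtree and
   [rev (b n)] to the leftmost one of the right subtree. *)
Lemma alt_seq_rearranged {X : TopSpace} (x : X) (a b : nat -> R -> X) :
  exists phi, bijective_nat phi /\
    (forall i, right_chain x (alt_seq a b) (phi (into_left_subtree i)) = right_chain x a i) /\
    (forall i, right_chain x (alt_seq a b) (phi (into_right_subtree i)) = left_chain x b i) /\
    right_chain x (alt_seq a b) (phi O) = const_path x.
Proof.
  destruct (bijection_extending (fun i => exists k, middle_index k = i)
              (fun i => exists k, rightmost_index k = i) middle_index rightmost_index)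
    as [phi [Bp [Pa Pb]]]; try tauto.
  { apply middle_index_inj. } { apply rightmost_index_inj. }
  { apply middle_index_coinfinite. } { apply rightmost_index_coinfinite. }
  set (N := fun i => right_chain x (alt_seq a b) (phi i)).
  assert (NotA : forall i, ~ (exists k, middle_index k = i) -> N i = const_path x).
  { intros i Hi. unfold N. pose proof (Pb i Hi) as Hr.
    destruct (tau_index_surj (phi i)) as [m [k [Hk E]]]. rewrite E.
    apply right_chain_off; auto. intros ->. apply Hr. exists m. rewrite E. auto. }
  exists phi. split; [auto | split; [|split]].
  - intros i. destruct (tau_index_surj i) as [n [k [Hk ->]]].
    rewrite into_left_subtree_index by auto.
    destruct (Nat.eq_dec k (2 ^ n - 1)) as [-> | Ne].
    + rewrite <- middle_index_even, Pa. unfold rightmost_index.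
      rewrite !right_chain_on, alt_seq_even. auto.
    + fold (N (tau_index (S n) k)). rewrite NotA, right_chain_off; auto.
      intros [k0 E]. destruct (middle_index_level n k ltac:(simpl; lia) k0 E); lia.
  - intros i. destruct (tau_index_surj i) as [n [k [Hk ->]]].
    rewrite into_right_subtree_index by auto.
    destruct (Nat.eq_dec k 0) as [-> | Ne].
    + rewrite Nat.add_0_l, <- middle_index_odd, Pa. unfold rightmost_index.
      rewrite right_chain_on, alt_seq_odd, left_chain_on. auto.
    + fold (N (tau_index (S n) (k + 2 ^ n))). rewrite NotA, left_chain_off; auto.
      intros [k0 E].
      destruct (middle_index_level n (k + 2 ^ n) ltac:(simpl; lia) k0 E); pose proof (pow2_pos n);
        lia.
  - fold (N O). apply NotA. intros [k E]. unfold middle_index in E.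
    change O with (tau_index 0 0) in E.
    apply tau_index_inj in E; [| apply middle_index_valid | simpl; lia]. destruct E; discriminate.
Qed.

(* After the rearrangement, the transfinite product of the right chain of [alt_seq a b]
   becomes [prod a] (reparametrised) on the left third, constant on the middle third and
   [prod b] backwards on the right third. *)
Lemma phtpy_of_alt_prod_nullhomotopic {X : TopSpace} (x : X) a b :
  transf_pi1_comm x -> null_seq x a -> null_seq x b ->
  phtpy (inf_prod x (alt_seq a b)) (const_path x) -> phtpy (inf_prod x a) (inf_prod x b).
Proof.
  intros TC Na Nb Hz. pose proof (null_alt_seq x a b Na Nb) as Nz.
  pose proof (null_right_chain x _ Nz) as NRz.
  destruct (alt_seq_rearranged x a b) as [phi [Bp [Nleft [Nright N0]]]].
  set (N := fun i => right_chain x (alt_seq a b) (phi i)).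
  assert (NN : null_seq x N) by apply (null_comp x _ phi NRz (proj1 Bp)).
  set (PN := tau_prod x N).
  assert (HPN : IsTauProd x N PN) by apply tau_prod_spec, NN.
  assert (IA : IsInfProd x a (inf_prod x a)) by apply inf_prod_spec, Na.
  assert (IB : IsInfProd x b (inf_prod x b)) by apply inf_prod_spec, Nb.
  pose proof (inf_prod_cont x _ _ Na IA) as CA. pose proof (inf_prod_cont x _ _ Nb IB) as CB.
  destruct chain_map_reparam as [C1 [I1 [E10 E11]]].
  apply phtpy_trans with (fun t => inf_prod x a (chain_map t));
    [apply phtpy_sym, phtpy_reparam; auto|].
  apply phtpy_trans with (fun t => inf_prod x b (chain_map t)); [|apply phtpy_reparam; auto].
  apply (phtpy_of_nullhomotopic_thirds x PN); auto using cont01_comp.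
  - apply phtpy_trans with (tau_prod x (right_chain x (alt_seq a b))).
    { apply phtpy_sym, (TC _ phi NRz Bp); auto. apply tau_prod_spec, NRz. }
    apply phtpy_trans with (inf_prod x (alt_seq a b)); auto.
    apply (phtpy_reparam_eq _ _ chain_map); auto. apply (inf_prod_cont x _ _ Nz), inf_prod_spec, Nz.
    intros t Ht. apply (right_chain_tau_prod x (alt_seq a b)); auto.
    + apply tau_prod_spec, NRz.
    + apply inf_prod_spec, Nz.
  - intros t Ht. apply (right_chain_tau_prod x a (fun t => PN (t / 3))); auto.
    apply (tau_prod_seq_ext x (fun i => N (into_left_subtree i))); auto.
    apply tau_prod_left_third; auto.
  - intros t Ht. rewrite (tau_prod_middle_third x N PN t HPN Ht). unfold N. rewrite N0. auto.
  - intros t Ht. apply (left_chain_tau_prod x b (fun t => PN (2/3 + t / 3))); auto.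
    apply (tau_prod_seq_ext x (fun i => N (into_right_subtree i))); auto.
    apply tau_prod_right_third; auto.
Qed.

Lemma wd_inf_products_of_hom_hausdorff {X : TopSpace} (x : X) :
  transf_pi1_comm x -> homotopically_hausdorff x -> wd_inf_products x.
Proof.
  intros TC HH a b Na Nb Hab p q Hp Hq.
  pose proof (phtpy_of_alt_prod_nullhomotopic x a b TC Na Nb
    (alt_prod_nullhomotopic x a b HH Na Nb Hab)).
  apply (phtpy_ext (inf_prod x a) (inf_prod x b)); auto.
  - intros t Ht. apply (inf_prod_unique x a _ _ (proj1 Na)); auto. apply inf_prod_spec, Na.
  - intros t Ht. apply (inf_prod_unique x b _ _ (proj1 Nb)); auto. apply inf_prod_spec, Nb.
Qed.

Theorem mainTheorem7 (X : TopSpace) (x : X) :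
  transf_pi1_comm x ->
  (wd_inf_products x <-> wd_transf_products x) /\
  (first_countable_at x ->
     (wd_inf_products x <-> homotopically_hausdorff x) /\
     (wd_transf_products x <-> homotopically_hausdorff x)).
Proof.
  intros TC.
  pose proof (wd_transf_products_of_wd_inf x TC) as InfTransf.
  pose proof (wd_inf_products_of_wd_transf x) as TransfInf.
  pose proof (wd_inf_products_of_hom_hausdorff x TC) as HHInf.
  split; [tauto|]. intros FC.
  pose proof (hom_hausdorff_of_wd_transf x FC) as TransfHH.
  tauto.
Qed.
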